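(* Let $(a_j)_{j\in\mathbb{N}_0}$ be a complex sequence with $\sum_{j=0}^\infty|a_j|<\infty$, and let $(b_j)_{j\in\mathbb{N}_0}$ be a strictly increasing sequence of positive reals with $b_j\to\infty$, such that $$\liminf_{j\to\infty}\frac{b_{j+1}}{b_j}>1\quad\text{and}\quad a_jb_j\not\to0\ \text{ as } j\to\infty.$$ Let $f(t)=\sum_{j=0}^\infty a_je^{i b_jt}$, $t\in\mathbb{R}$. Then $f$ is bounded and continuous on $\mathbb{R}$ but differentiable at no point of $\mathbb{R}$. If in addition $\sup_j|a_j|b_j=\infty$, then $f$ is not Lipschitz continuous at any point of $\mathbb{R}$. The same conclusions hold for $\operatorname{Re}f$ and $\operatorname{Im}f$.
   Context: A function $g\colon\mathbb{R}\to\mathbb{C}$ is Lipschitz continuous at $t_0$ if there exist constants $L>0$, $\eta>0$ such that $|g(t)-g(t_0)|\le L|t-t_0|$ for all $t\in\,]t_0-\eta,t_0+\eta[$. *)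

(* real analysis with Stdlib Reals.
   Complex numbers are represented by pairs (real part, imaginary part) of reals;
   a complex-valued function g : R -> C is represented by two real functions. *)
From Stdlib Require Import Reals.
Open Scope R_scope.

Definition cmod (x y : R) : R := sqrt (x ^ 2 + y ^ 2).

(* real part of the j-th term a_j e^{i b_j t}, with a_j = ax j + i ay j *)
Definition term_re (ax ay b : nat -> R) (t : R) (j : nat) : R :=
  ax j * cos (b j * t) - ay j * sin (b j * t).
Definition term_im (ax ay b : nat -> R) (t : R) (j : nat) : R :=
  ax j * sin (b j * t) + ay j * cos (b j * t).

Definition lipschitz_at (g : R -> R) (t0 : R) : Prop :=
  exists L eta, 0 < L /\ 0 < eta /\
    forall t, Rabs (t - t0) < eta -> Rabs (g t - g t0) <= L * Rabs (t - t0).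

Definition clipschitz_at (gr gi : R -> R) (t0 : R) : Prop :=
  exists L eta, 0 < L /\ 0 < eta /\
    forall t, Rabs (t - t0) < eta ->
      cmod (gr t - gr t0) (gi t - gi t0) <= L * Rabs (t - t0).

Definition cdifferentiable_at (gr gi : R -> R) (t : R) : Prop :=
  exists lr li, derivable_pt_lim gr t lr /\ derivable_pt_lim gi t li.

(* Suppose [|g (t0 + h) - g t0 - D h| <= eps |h|] near [t0] for the real part [g] of the series
   ([eps] arbitrary if [g] is differentiable at [t0], [eps = L] if [g] is [L]-Lipschitz there).
   Integrate [s |-> g (t0 + s / b n)] against the kernel [K = phi''] with
   [phi s = cos s * (1 + cos (s / m))] on [[-m pi, m pi]].  As [K] is orthogonal to [1] and [s],
   only the error term survives, so the integral is [O (eps / b n)].  Termwise, it weighs [a j]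
   by the transform of [K] at [lambda = b j / b n], which is about [m pi] at [lambda = 1] and
   [O (lambda^2)], resp. [O (1 / lambda)], for [lambda <= 1 / q], resp. [lambda >= q]; by
   lacunarity the terms [j <> n] are therefore small.  Choosing [n] to maximise [|a j|] over
   [j >= N] gives [c N <= alpha + rho * sum_(i < N) c i b i / b N] for [c i = |a i| b i], with
   [alpha] proportional to [eps] and [rho <= (q - 1) / 2], and this recursion forces
   [c N <= 3 alpha] for large [N].  Hence [|a j| b j = O (eps)] eventually, which contradicts
   [a j b j -/-> 0] in the differentiable case and [sup |a j| b j = oo] in the Lipschitz case.
   The imaginary part is the real part of the series with coefficients [- i a j]. *)

From Coquelicot Require Import Coquelicot.
From Stdlib Require Import Reals Lra Lia Classical.
Open Scope R_scope.

(** * Series with a summable majorant *)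

Lemma cmod_ge0 x y : 0 <= cmod x y.
Proof. apply sqrt_pos. Qed.

Lemma cmod_sqr x y : cmod x y * cmod x y = x * x + y * y.
Proof. unfold cmod. rewrite sqrt_sqrt; nra. Qed.

Lemma cmod_bounds x y :
  Rabs x <= cmod x y /\ Rabs y <= cmod x y /\ cmod x y <= Rabs x + Rabs y.
Proof.
  assert (H0 := cmod_ge0 x y). assert (H1 := cmod_sqr x y).
  assert (Rabs x * Rabs x = x * x) by (rewrite <- Rabs_mult; apply Rabs_right; nra).
  assert (Rabs y * Rabs y = y * y) by (rewrite <- Rabs_mult; apply Rabs_right; nra).
  assert (0 <= Rabs x) by apply Rabs_pos. assert (0 <= Rabs y) by apply Rabs_pos.
  repeat split; nra.
Qed.

Lemma cmod_swap_opp x y : cmod y (- x) = cmod x y.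
Proof. unfold cmod. f_equal. ring. Qed.

Section Terms.

Variables (ax ay b : nat -> R).

Lemma cmod_term t j : cmod (term_re ax ay b t j) (term_im ax ay b t j) = cmod (ax j) (ay j).
Proof.
  unfold cmod, term_re, term_im. f_equal.
  assert (H := sin2_cos2 (b j * t)). unfold Rsqr in H.
  transitivity ((ax j ^ 2 + ay j ^ 2) *
    (sin (b j * t) * sin (b j * t) + cos (b j * t) * cos (b j * t))); [ring | rewrite H; ring].
Qed.

Lemma Rabs_term_re_le t j : Rabs (term_re ax ay b t j) <= cmod (ax j) (ay j).
Proof. rewrite <- (cmod_term t j). apply cmod_bounds. Qed.

Lemma Rabs_term_im_le t j : Rabs (term_im ax ay b t j) <= cmod (ax j) (ay j).
Proof. rewrite <- (cmod_term t j). apply cmod_bounds. Qed.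

Lemma term_re_shift t h j :
  term_re ax ay b (t + h) j = term_re ax ay b t j * cos (b j * h) - term_im ax ay b t j * sin (b j * h).
Proof.
  unfold term_re, term_im. replace (b j * (t + h)) with (b j * t + b j * h) by ring.
  rewrite cos_plus, sin_plus. ring.
Qed.

Lemma term_im_as_re t j : term_im ax ay b t j = term_re ay (fun k => - ax k) b t j.
Proof. unfold term_im, term_re. ring. Qed.

Lemma term_re_continuity_pt j t : continuity_pt (fun t => term_re ax ay b t j) t.
Proof. unfold term_re. reg. Qed.

End Terms.

Lemma sum_f_R0_ge_term (u : nat -> R) (Hu : forall i, 0 <= u i) j N :
  (j <= N)%nat -> u j <= sum_f_R0 u N.
Proof.
  intros H. induction N.
  - replace j with O by lia. simpl. lra.
  - destruct (Nat.eq_dec j (S N)) as [->|ne].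
    + simpl. assert (0 <= sum_f_R0 u N) by (apply cond_pos_sum; auto). lra.
    + simpl. specialize (IHN ltac:(lia)). specialize (Hu (S N)). lra.
Qed.

Lemma sum_f_R0_le_mono (u : nat -> R) (Hu : forall i, 0 <= u i) n m :
  (n <= m)%nat -> sum_f_R0 u n <= sum_f_R0 u m.
Proof. intros H. induction H; simpl; [lra | specialize (Hu (S m)); lra]. Qed.

Lemma series_terms_cv_0 (u : nat -> R) l : Un_cv (sum_f_R0 u) l -> Un_cv u 0.
Proof.
  intros Hl eps Heps. destruct (Hl (eps / 2) ltac:(lra)) as [N HN].
  exists (S N). intros [|n] Hn; [lia|]. unfold R_dist in *. rewrite Rminus_0_r.
  replace (u (S n)) with ((sum_f_R0 u (S n) - l) - (sum_f_R0 u n - l)) by (simpl; ring).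
  eapply Rle_lt_trans; [apply Rabs_triang|]. rewrite Rabs_Ropp.
  assert (H1 := HN (S n) ltac:(lia)). assert (H2 := HN n ltac:(lia)). lra.
Qed.

Section Majorant.

Variables (u A : nat -> R) (l : R).
Hypothesis HA : forall j, Rabs (u j) <= A j.
Hypothesis Hl : Un_cv (sum_f_R0 A) l.

Lemma sum_f_R0_diff_le N k :
  Rabs (sum_f_R0 u (N + k) - sum_f_R0 u N) <= sum_f_R0 A (N + k) - sum_f_R0 A N.
Proof.
  induction k.
  - rewrite Nat.add_0_r, Rminus_diag, Rabs_R0. lra.
  - rewrite Nat.add_succ_r. simpl.
    replace (sum_f_R0 u (N + k) + u (S (N + k)) - sum_f_R0 u N) with
      ((sum_f_R0 u (N + k) - sum_f_R0 u N) + u (S (N + k))) by ring.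
    eapply Rle_trans; [apply Rabs_triang|]. specialize (HA (S (N + k))). lra.
Qed.

Lemma series_remainder_le g : Un_cv (sum_f_R0 u) g ->
  forall N, Rabs (g - sum_f_R0 u N) <= l - sum_f_R0 A N.
Proof.
  intros Hg N.
  assert (HA0 : forall j, 0 <= A j) by (intro j; eapply Rle_trans; [apply Rabs_pos | apply HA]).
  destruct (Rle_or_lt (Rabs (g - sum_f_R0 u N)) (l - sum_f_R0 A N)) as [h|h]; auto.
  exfalso.
  destruct (Hg (Rabs (g - sum_f_R0 u N) - (l - sum_f_R0 A N))) as [M HM]; [lra|].
  specialize (HM (M + N)%nat ltac:(lia)). unfold R_dist in HM.
  assert (H2 := sum_f_R0_diff_le N M). rewrite Nat.add_comm in H2.
  assert (H3 := sum_incr A (M + N) l Hl HA0).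
  assert (Rabs (g - sum_f_R0 u N) <=
          Rabs (sum_f_R0 u (M + N) - g) + Rabs (sum_f_R0 u (M + N) - sum_f_R0 u N)).
  { rewrite Rabs_minus_sym with (x := sum_f_R0 u (M + N)).
    replace (g - sum_f_R0 u N) with
      ((g - sum_f_R0 u (M + N)) + (sum_f_R0 u (M + N) - sum_f_R0 u N)) by ring.
    apply Rabs_triang. }
  lra.
Qed.

Lemma series_abs_le g : Un_cv (sum_f_R0 u) g -> Rabs g <= l.
Proof.
  intros Hg. assert (H1 := series_remainder_le g Hg 0). simpl in H1.
  replace g with ((g - u 0%nat) + u 0%nat) by ring.
  eapply Rle_trans; [apply Rabs_triang|]. specialize (HA 0%nat). lra.
Qed.

End Majorant.

Lemma series_continuity (u : R -> nat -> R) (A : nat -> R) l g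
  (HA : forall t j, Rabs (u t j) <= A j) (Hl : Un_cv (sum_f_R0 A) l)
  (Hg : forall t, Un_cv (sum_f_R0 (u t)) (g t))
  (Hc : forall j t, continuity_pt (fun t => u t j) t) :
  continuity g.
Proof.
  assert (HA0 : forall j, 0 <= A j) by (intro j; eapply Rle_trans; [apply Rabs_pos | apply (HA 0 j)]).
  intro x.
  apply (CVU_continuity (fun N t => sum_f_R0 (u t) N) g x (mkposreal 1 Rlt_0_1)).
  - intros eps Heps. destruct (Hl eps Heps) as [N HN]. exists N. intros n y Hn _.
    assert (H1 := series_remainder_le (u y) A l (HA y) Hl (g y) (Hg y) n).
    specialize (HN N (le_n N)). unfold R_dist in HN.
    assert (H2 := sum_f_R0_le_mono A HA0 N n Hn).
    assert (H3 := sum_incr A N l Hl HA0).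
    rewrite Rabs_left1 in HN by lra. lra.
  - intros n y _. induction n as [|k IH]; [apply (Hc 0%nat)|].
    change (continuity_pt (fun t => sum_f_R0 (u t) k + u t (S k)) y).
    apply continuity_pt_plus; [exact IH | apply Hc].
  - unfold Boule. rewrite Rminus_diag, Rabs_R0. simpl. lra.
Qed.

(** * Trigonometric integrals over [[-S, S]] *)

Lemma is_RInt_eq (f g : R -> R) a b I :
  (forall x, f x = g x) -> is_RInt f a b I -> is_RInt g a b I.
Proof. intros H. apply is_RInt_ext. intros; apply H. Qed.

Lemma is_RInt_lin2 (f g : R -> R) a b If Ig c d :
  is_RInt f a b If -> is_RInt g a b Ig ->
  is_RInt (fun x => c * f x + d * g x) a b (c * If + d * Ig).
Proof.
  intros Hf Hg.
  apply (is_RInt_plus (fun x => c * f x) (fun x => d * g x));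
    [apply (is_RInt_scal f a b c If Hf) | apply (is_RInt_scal g a b d Ig Hg)].
Qed.

Lemma is_RInt_lin3 (f1 f2 f3 : R -> R) a b I1 I2 I3 c1 c2 c3 :
  is_RInt f1 a b I1 -> is_RInt f2 a b I2 -> is_RInt f3 a b I3 ->
  is_RInt (fun x => c1 * f1 x + c2 * f2 x + c3 * f3 x) a b (c1 * I1 + c2 * I2 + c3 * I3).
Proof.
  intros H1 H2 H3.
  apply is_RInt_eq with (fun x => 1 * (c1 * f1 x + c2 * f2 x) + c3 * f3 x); [intros; ring|].
  replace (c1 * I1 + c2 * I2 + c3 * I3) with (1 * (c1 * I1 + c2 * I2) + c3 * I3) by ring.
  apply is_RInt_lin2; [apply is_RInt_lin2|]; auto.
Qed.

Lemma is_RInt_primitive (F f : R -> R) a b :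
  (forall x, is_derive F x (f x)) -> (forall x, continuous f x) -> is_RInt f a b (F b - F a).
Proof.
  intros H1 H2.
  exact (@is_RInt_derive R_CompleteNormedModule F f a b (fun x _ => H1 x) (fun x _ => H2 x)).
Qed.

Ltac continuous_by_derive :=
  intro; apply (@ex_derive_continuous R_AbsRing R_NormedModule); auto_derive; auto.

Definition cos_int (S mu : R) : R :=
  if Req_EM_T mu 0 then 2 * S else 2 * sin (mu * S) / mu.

Lemma cos_int_mul S mu : mu * cos_int S mu = 2 * sin (mu * S).
Proof.
  unfold cos_int. destruct (Req_EM_T mu 0) as [->|n].
  - rewrite !Rmult_0_l, sin_0. ring.
  - field. auto.
Qed.

Lemma cos_int_opp S mu : cos_int S (- mu) = cos_int S mu.
Proof.
  unfold cos_int. destruct (Req_EM_T (- mu) 0), (Req_EM_T mu 0); try lra; auto.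
  replace (- mu * S) with (- (mu * S)) by ring. rewrite sin_neg. field. auto.
Qed.

Lemma cos_int_0 S : cos_int S 0 = 2 * S.
Proof. unfold cos_int. destruct (Req_EM_T 0 0); lra. Qed.

Lemma is_RInt_cos S mu : is_RInt (fun s => cos (mu * s)) (- S) S (cos_int S mu).
Proof.
  unfold cos_int. destruct (Req_EM_T mu 0) as [->|n].
  - apply is_RInt_eq with (fun _ => 1); [intros; rewrite Rmult_0_l, cos_0; auto|].
    replace (2 * S) with (scal (S - - S) 1) by (unfold scal; simpl; unfold mult; simpl; ring).
    apply (@is_RInt_const R_CompleteNormedModule).
  - set (F := fun s => sin (mu * s) / mu).
    replace (2 * sin (mu * S) / mu) with (F S - F (- S)).
    + apply is_RInt_primitive; [intro; unfold F; auto_derive; auto; field; auto | continuous_by_derive].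
    + unfold F. replace (mu * - S) with (- (mu * S)) by ring. rewrite sin_neg. field. auto.
Qed.

Lemma is_RInt_sin S mu : is_RInt (fun s => sin (mu * s)) (- S) S 0.
Proof.
  destruct (Req_EM_T mu 0) as [->|n].
  - assert (H := is_RInt_primitive (fun _ => 0) (fun s => sin (0 * s)) (- S) S).
    rewrite Rminus_0_r in H. apply H; [|continuous_by_derive].
    intro; auto_derive; auto. rewrite Rmult_0_l, sin_0. ring.
  - set (F := fun s => - cos (mu * s) / mu).
    replace 0 with (F S - F (- S)).
    + apply is_RInt_primitive; [intro; unfold F; auto_derive; auto; field; auto | continuous_by_derive].
    + unfold F. replace (mu * - S) with (- (mu * S)) by ring. rewrite cos_neg. field. auto.
Qed.

Lemma is_RInt_id_cos S mu : is_RInt (fun s => s * cos (mu * s)) (- S) S 0.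
Proof.
  destruct (Req_EM_T mu 0) as [->|n].
  - apply is_RInt_eq with (fun s => s); [intros; rewrite Rmult_0_l, cos_0; ring|].
    set (F := fun s => s * s / 2).
    replace 0 with (F S - F (- S)) by (unfold F; field).
    apply is_RInt_primitive; unfold F; [intro; auto_derive; auto; field | continuous_by_derive].
  - set (F := fun s => cos (mu * s) / (mu * mu) + s * sin (mu * s) / mu).
    replace 0 with (F S - F (- S)).
    + apply is_RInt_primitive; [intro; unfold F; auto_derive; auto; field; auto | continuous_by_derive].
    + unfold F. replace (mu * - S) with (- (mu * S)) by ring. rewrite cos_neg, sin_neg. field. auto.
Qed.

Lemma is_RInt_id_sin S mu : mu <> 0 ->
  is_RInt (fun s => s * sin (mu * s)) (- S) S
    (2 * sin (mu * S) / (mu * mu) - 2 * S * cos (mu * S) / mu).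
Proof.
  intros n. set (F := fun s => sin (mu * s) / (mu * mu) - s * cos (mu * s) / mu).
  replace (2 * sin (mu * S) / (mu * mu) - 2 * S * cos (mu * S) / mu) with (F S - F (- S)).
  - apply is_RInt_primitive; [intro; unfold F; auto_derive; auto; field; auto | continuous_by_derive].
  - unfold F. replace (mu * - S) with (- (mu * S)) by ring. rewrite cos_neg, sin_neg. field. auto.
Qed.

Lemma is_RInt_cos_cos S nu la :
  is_RInt (fun s => cos (nu * s) * cos (la * s)) (- S) S ((cos_int S (nu - la) + cos_int S (nu + la)) / 2).
Proof.
  apply is_RInt_eq with (fun s => / 2 * cos ((nu - la) * s) + / 2 * cos ((nu + la) * s)).
  - intro x. rewrite !Rmult_minus_distr_r, !Rmult_plus_distr_r, cos_minus, cos_plus. field.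
  - replace ((cos_int S (nu - la) + cos_int S (nu + la)) / 2) with
      (/ 2 * cos_int S (nu - la) + / 2 * cos_int S (nu + la)) by field.
    apply is_RInt_lin2; apply is_RInt_cos.
Qed.

Lemma is_RInt_sin_sin S nu la :
  is_RInt (fun s => sin (nu * s) * sin (la * s)) (- S) S ((cos_int S (nu - la) - cos_int S (nu + la)) / 2).
Proof.
  apply is_RInt_eq with (fun s => / 2 * cos ((nu - la) * s) + (- / 2) * cos ((nu + la) * s)).
  - intro x. rewrite !Rmult_minus_distr_r, !Rmult_plus_distr_r, cos_minus, cos_plus. field.
  - replace ((cos_int S (nu - la) - cos_int S (nu + la)) / 2) with
      (/ 2 * cos_int S (nu - la) + (- / 2) * cos_int S (nu + la)) by field.
    apply is_RInt_lin2; apply is_RInt_cos.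
Qed.

Lemma is_RInt_sin_cos S nu la : is_RInt (fun s => sin (nu * s) * cos (la * s)) (- S) S 0.
Proof.
  apply is_RInt_eq with (fun s => / 2 * sin ((nu + la) * s) + / 2 * sin ((nu - la) * s)).
  - intro x. rewrite !Rmult_minus_distr_r, !Rmult_plus_distr_r, sin_minus, sin_plus. field.
  - replace 0 with (/ 2 * 0 + / 2 * 0) by field. apply is_RInt_lin2; apply is_RInt_sin.
Qed.

Lemma is_RInt_cos_sin S nu la : is_RInt (fun s => cos (nu * s) * sin (la * s)) (- S) S 0.
Proof.
  apply is_RInt_eq with (fun s => sin (la * s) * cos (nu * s)); [intros; ring|].
  apply is_RInt_sin_cos.
Qed.

(** * The kernel *)

Definition nu_p (m : R) : R := 1 + / m.
Definition nu_m (m : R) : R := 1 - / m.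
Definition width (m : R) : R := m * PI.

(* [kcos m] and [ksin m] are the second derivatives of [cos s * (1 + cos (s / m))] and
   [sin s * (1 + cos (s / m))]; the window [1 + cos (s / m)] vanishes to second order at
   [s = ± width m], so integrating by parts twice against [cos (l s)], [sin (l s)], [1] or [s]
   produces no boundary terms. *)
Definition kcos (m s : R) : R :=
  - cos (1 * s) - nu_p m ^ 2 / 2 * cos (nu_p m * s) - nu_m m ^ 2 / 2 * cos (nu_m m * s).
Definition ksin (m s : R) : R :=
  - sin (1 * s) - nu_p m ^ 2 / 2 * sin (nu_p m * s) - nu_m m ^ 2 / 2 * sin (nu_m m * s).

Definition kcos_hat (m l : R) : R :=
  - ((cos_int (width m) (1 - l) + cos_int (width m) (1 + l)) / 2)
  - nu_p m ^ 2 / 2 * ((cos_int (width m) (nu_p m - l) + cos_int (width m) (nu_p m + l)) / 2)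
  - nu_m m ^ 2 / 2 * ((cos_int (width m) (nu_m m - l) + cos_int (width m) (nu_m m + l)) / 2).
Definition ksin_hat (m l : R) : R :=
  - ((cos_int (width m) (1 - l) - cos_int (width m) (1 + l)) / 2)
  - nu_p m ^ 2 / 2 * ((cos_int (width m) (nu_p m - l) - cos_int (width m) (nu_p m + l)) / 2)
  - nu_m m ^ 2 / 2 * ((cos_int (width m) (nu_m m - l) - cos_int (width m) (nu_m m + l)) / 2).

(* The integral of [cos (mu s) * (1 + cos (s / m))] over [-width m, width m]. *)
Definition hann_int (m mu : R) : R :=
  cos_int (width m) mu + / 2 * cos_int (width m) (mu + / m) + / 2 * cos_int (width m) (mu - / m).

Lemma is_RInt_kcos_cos m l : is_RInt (fun s => kcos m s * cos (l * s)) (- width m) (width m) (kcos_hat m l).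
Proof.
  apply is_RInt_eq with (fun s => (-1) * (cos (1 * s) * cos (l * s))
      + (- nu_p m ^ 2 / 2) * (cos (nu_p m * s) * cos (l * s))
      + (- nu_m m ^ 2 / 2) * (cos (nu_m m * s) * cos (l * s))); [intro; cbv beta; unfold kcos; field|].
  unfold kcos_hat.
  match goal with |- is_RInt _ _ _ ?v => replace v with
    ((-1) * ((cos_int (width m) (1 - l) + cos_int (width m) (1 + l)) / 2)
     + (- nu_p m ^ 2 / 2) * ((cos_int (width m) (nu_p m - l) + cos_int (width m) (nu_p m + l)) / 2)
     + (- nu_m m ^ 2 / 2) * ((cos_int (width m) (nu_m m - l) + cos_int (width m) (nu_m m + l)) / 2))
    by field end.
  apply is_RInt_lin3; apply is_RInt_cos_cos.
Qed.

Lemma is_RInt_ksin_sin m l : is_RInt (fun s => ksin m s * sin (l * s)) (- width m) (width m) (ksin_hat m l).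
Proof.
  apply is_RInt_eq with (fun s => (-1) * (sin (1 * s) * sin (l * s))
      + (- nu_p m ^ 2 / 2) * (sin (nu_p m * s) * sin (l * s))
      + (- nu_m m ^ 2 / 2) * (sin (nu_m m * s) * sin (l * s))); [intro; cbv beta; unfold ksin; field|].
  unfold ksin_hat.
  match goal with |- is_RInt _ _ _ ?v => replace v with
    ((-1) * ((cos_int (width m) (1 - l) - cos_int (width m) (1 + l)) / 2)
     + (- nu_p m ^ 2 / 2) * ((cos_int (width m) (nu_p m - l) - cos_int (width m) (nu_p m + l)) / 2)
     + (- nu_m m ^ 2 / 2) * ((cos_int (width m) (nu_m m - l) - cos_int (width m) (nu_m m + l)) / 2))
    by field end.
  apply is_RInt_lin3; apply is_RInt_sin_sin.
Qed.

Lemma is_RInt_kcos_sin m l : is_RInt (fun s => kcos m s * sin (l * s)) (- width m) (width m) 0.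
Proof.
  apply is_RInt_eq with (fun s => (-1) * (cos (1 * s) * sin (l * s))
      + (- nu_p m ^ 2 / 2) * (cos (nu_p m * s) * sin (l * s))
      + (- nu_m m ^ 2 / 2) * (cos (nu_m m * s) * sin (l * s))); [intro; cbv beta; unfold kcos; field|].
  replace 0 with ((-1) * 0 + (- nu_p m ^ 2 / 2) * 0 + (- nu_m m ^ 2 / 2) * 0) by ring.
  apply is_RInt_lin3; apply is_RInt_cos_sin.
Qed.

Lemma is_RInt_ksin_cos m l : is_RInt (fun s => ksin m s * cos (l * s)) (- width m) (width m) 0.
Proof.
  apply is_RInt_eq with (fun s => (-1) * (sin (1 * s) * cos (l * s))
      + (- nu_p m ^ 2 / 2) * (sin (nu_p m * s) * cos (l * s))
      + (- nu_m m ^ 2 / 2) * (sin (nu_m m * s) * cos (l * s))); [intro; cbv beta; unfold ksin; field|].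
  replace 0 with ((-1) * 0 + (- nu_p m ^ 2 / 2) * 0 + (- nu_m m ^ 2 / 2) * 0) by ring.
  apply is_RInt_lin3; apply is_RInt_sin_cos.
Qed.

Lemma is_RInt_kcos_id m : is_RInt (fun s => kcos m s * s) (- width m) (width m) 0.
Proof.
  apply is_RInt_eq with (fun s => (-1) * (s * cos (1 * s)) + (- nu_p m ^ 2 / 2) * (s * cos (nu_p m * s))
      + (- nu_m m ^ 2 / 2) * (s * cos (nu_m m * s))); [intro; cbv beta; unfold kcos; field|].
  replace 0 with ((-1) * 0 + (- nu_p m ^ 2 / 2) * 0 + (- nu_m m ^ 2 / 2) * 0) by ring.
  apply is_RInt_lin3; apply is_RInt_id_cos.
Qed.

Lemma is_RInt_ksin m : is_RInt (fun s => ksin m s) (- width m) (width m) 0.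
Proof.
  apply is_RInt_eq with (fun s => ksin m s * cos (0 * s)); [intro; cbv beta; rewrite Rmult_0_l, cos_0; ring|].
  apply is_RInt_ksin_cos.
Qed.

Lemma sin_minus_PI a : sin (a - PI) = - sin a.
Proof. rewrite sin_minus, cos_PI, sin_PI. ring. Qed.

Lemma kernel_hat_hann m (Hm : m <> 0) l :
  kcos_hat m l = - (l * l / 2) * (hann_int m (l - 1) + hann_int m (l + 1)) /\
  ksin_hat m l = - (l * l / 2) * (hann_int m (l - 1) - hann_int m (l + 1)).
Proof.
  assert (H1 := cos_int_mul (width m) (1 - l)).
  assert (H2 := cos_int_mul (width m) (1 + l)).
  assert (H3 := cos_int_mul (width m) (nu_p m - l)).
  assert (H4 := cos_int_mul (width m) (nu_p m + l)).
  assert (H5 := cos_int_mul (width m) (nu_m m - l)).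
  assert (H6 := cos_int_mul (width m) (nu_m m + l)).
  replace ((nu_p m - l) * width m) with ((1 - l) * width m + PI) in H3
    by (unfold nu_p, width; field; auto).
  replace ((nu_p m + l) * width m) with ((1 + l) * width m + PI) in H4
    by (unfold nu_p, width; field; auto).
  replace ((nu_m m - l) * width m) with ((1 - l) * width m - PI) in H5
    by (unfold nu_m, width; field; auto).
  replace ((nu_m m + l) * width m) with ((1 + l) * width m - PI) in H6
    by (unfold nu_m, width; field; auto).
  rewrite neg_sin in H3, H4. rewrite sin_minus_PI in H5, H6.
  unfold kcos_hat, ksin_hat, hann_int.
  replace (l - 1) with (- (1 - l)) by ring.
  replace (- (1 - l) + / m) with (- (nu_m m - l)) by (unfold nu_m; ring).
  replace (- (1 - l) - / m) with (- (nu_p m - l)) by (unfold nu_p; ring).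
  replace (l + 1 + / m) with (nu_p m + l) by (unfold nu_p; ring).
  replace (l + 1 - / m) with (nu_m m + l) by (unfold nu_m; ring).
  replace (l + 1) with (1 + l) by ring.
  rewrite !cos_int_opp.
  split; apply Rminus_diag_uniq.
  - match goal with |- ?a - ?b = 0 => replace (a - b) with
     (-(1/2)*((1+l)*((1-l)*cos_int (width m) (1 - l)) + (1-l)*((1+l)*cos_int (width m) (1 + l)))
      - (1/4)*((nu_p m+l)*((nu_p m-l)*cos_int (width m) (nu_p m - l))
               + (nu_p m-l)*((nu_p m+l)*cos_int (width m) (nu_p m + l)))
      - (1/4)*((nu_m m+l)*((nu_m m-l)*cos_int (width m) (nu_m m - l))
               + (nu_m m-l)*((nu_m m+l)*cos_int (width m) (nu_m m + l)))) by field end.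
    rewrite H1, H2, H3, H4, H5, H6. unfold nu_p, nu_m. field. auto.
  - match goal with |- ?a - ?b = 0 => replace (a - b) with
     (-(1/2)*((1+l)*((1-l)*cos_int (width m) (1 - l)) - (1-l)*((1+l)*cos_int (width m) (1 + l)))
      - (1/4)*((nu_p m+l)*((nu_p m-l)*cos_int (width m) (nu_p m - l))
               - (nu_p m-l)*((nu_p m+l)*cos_int (width m) (nu_p m + l)))
      - (1/4)*((nu_m m+l)*((nu_m m-l)*cos_int (width m) (nu_m m - l))
               - (nu_m m-l)*((nu_m m+l)*cos_int (width m) (nu_m m + l)))) by field end.
    rewrite H1, H2, H3, H4, H5, H6. unfold nu_p, nu_m. field. auto.
Qed.

Section Kernel.

Variable m : R.
Hypothesis Hm2 : 2 <= m.

Let Hm : m <> 0. Proof. lra. Qed.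

Lemma is_RInt_kcos : is_RInt (fun s => kcos m s) (- width m) (width m) 0.
Proof.
  assert (H := is_RInt_kcos_cos m 0). rewrite (proj1 (kernel_hat_hann m Hm 0)) in H.
  replace (- (0 * 0 / 2) * (hann_int m (0 - 1) + hann_int m (0 + 1))) with 0 in H by field.
  revert H. apply is_RInt_eq. intro x. rewrite Rmult_0_l, cos_0. field.
Qed.

Lemma is_RInt_ksin_id : is_RInt (fun s => ksin m s * s) (- width m) (width m) 0.
Proof.
  assert (0 < / m <= / 2) by (split; [apply Rinv_0_lt_compat | apply Rinv_le_contravar]; lra).
  assert (H1 : (1 : R) <> 0) by lra.
  assert (Hp : nu_p m <> 0) by (unfold nu_p; lra).
  assert (Hn : nu_m m <> 0) by (unfold nu_m; lra).
  apply is_RInt_eq with (fun s => (-1) * (s * sin (1 * s)) + (- nu_p m ^ 2 / 2) * (s * sin (nu_p m * s))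
      + (- nu_m m ^ 2 / 2) * (s * sin (nu_m m * s))); [intro; cbv beta; unfold ksin; field|].
  set (S := width m).
  replace 0 with ((-1) * (2 * sin (1 * S) / (1 * 1) - 2 * S * cos (1 * S) / 1)
       + (- nu_p m ^ 2 / 2) * (2 * sin (nu_p m * S) / (nu_p m * nu_p m) - 2 * S * cos (nu_p m * S) / nu_p m)
       + (- nu_m m ^ 2 / 2) * (2 * sin (nu_m m * S) / (nu_m m * nu_m m) - 2 * S * cos (nu_m m * S) / nu_m m)).
  - apply is_RInt_lin3; apply is_RInt_id_sin; auto.
  - replace (nu_p m * S) with (S + PI) by (unfold nu_p, S, width; field; auto).
    replace (nu_m m * S) with (S - PI) by (unfold nu_m, S, width; field; auto).
    rewrite neg_sin, neg_cos, sin_minus_PI, Rmult_1_l, cos_minus, cos_PI, sin_PI.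
    unfold nu_p, nu_m in *. field. repeat split; lra.
Qed.

Lemma hann_int_mul mu :
  hann_int m mu * (mu * (mu * mu - / m * / m)) = - 2 * sin (mu * width m) / (m * m).
Proof.
  unfold hann_int.
  assert (H1 := cos_int_mul (width m) mu).
  assert (H2 := cos_int_mul (width m) (mu + / m)).
  assert (H3 := cos_int_mul (width m) (mu - / m)).
  replace ((mu + / m) * width m) with (mu * width m + PI) in H2 by (unfold width; field; auto).
  replace ((mu - / m) * width m) with (mu * width m - PI) in H3 by (unfold width; field; auto).
  rewrite neg_sin in H2. rewrite sin_minus_PI in H3.
  match goal with |- ?a = _ => replace a with
    ((mu * mu - / m * / m) * (mu * cos_int (width m) mu)
     + / 2 * (mu * (mu - / m)) * ((mu + / m) * cos_int (width m) (mu + / m))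
     + / 2 * (mu * (mu + / m)) * ((mu - / m) * cos_int (width m) (mu - / m))) by (field; auto) end.
  rewrite H1, H2, H3. field. auto.
Qed.

Lemma hann_int_0 : hann_int m 0 = 2 * width m.
Proof.
  unfold hann_int. rewrite cos_int_0, Rplus_0_l, Rminus_0_l, cos_int_opp.
  assert (H := cos_int_mul (width m) (/ m)).
  replace (/ m * width m) with PI in H by (unfold width; field; auto).
  rewrite sin_PI, Rmult_0_r in H.
  apply Rmult_integral in H as [H|H]; [apply Rinv_neq_0_compat in Hm; contradiction|].
  rewrite H. ring.
Qed.

Definition hat_const (d : R) : R := 8 / (3 * (m * m) * (d * d * d)).

(* The window's second-order zeros give [|hann_int m mu| = O(|mu|^-3)] away from [0]. *)
Lemma hann_int_abs_le mu d : 2 / m <= d -> d <= Rabs mu -> Rabs (hann_int m mu) <= hat_const d.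
Proof.
  intros Hd Hmu.
  assert (Hmm : 0 < m * m) by nra.
  assert (Hd0 : 0 < d) by (apply Rlt_le_trans with (2 / m); auto; apply Rdiv_lt_0_compat; lra).
  set (a := Rabs mu) in *.
  assert (Hmu2 : mu * mu = a * a) by (unfold a; rewrite <- Rabs_mult, Rabs_right; nra).
  assert (Hinv : / m * / m <= a * a / 4).
  { assert (2 / m * (2 / m) <= a * a) by (apply Rmult_le_compat; try lra; apply Rdiv_le_0_compat; lra).
    replace (2 / m * (2 / m)) with (4 * (/ m * / m)) in H by (field; auto). lra. }
  assert (HP : 3 / 4 * (a * a * a) <= Rabs (mu * (mu * mu - / m * / m))).
  { rewrite Rabs_mult, (Rabs_right (mu * mu - _)); fold a; rewrite Hmu2; nra. }
  assert (HW : Rabs (hann_int m mu) * Rabs (mu * (mu * mu - / m * / m)) <= 2 / (m * m)).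
  { rewrite <- Rabs_mult, hann_int_mul. destruct (SIN_bound (mu * width m)).
    assert (0 < / (m * m)) by (apply Rinv_0_lt_compat; nra).
    unfold Rdiv. apply Rabs_le. split; nra. }
  assert (Hw0 := Rabs_pos (hann_int m mu)).
  assert (Hda : d * d * d <= a * a * a) by (apply Rmult_le_compat; try nra; apply Rmult_le_compat; nra).
  assert (H3 : Rabs (hann_int m mu) * (3 / 4 * (d * d * d)) * (m * m) <= 2).
  { apply Rle_trans with (2 / (m * m) * (m * m)); [|right; field; lra].
    apply Rmult_le_compat_r; [lra|]. eapply Rle_trans; [|exact HW].
    apply Rmult_le_compat_l; lra. }
  unfold hat_const. apply Rmult_le_reg_r with (3 * (m * m) * (d * d * d)).
  { assert (0 < d * d * d) by (repeat apply Rmult_lt_0_compat; lra).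
    apply Rmult_lt_0_compat; nra. }
  replace (8 / (3 * (m * m) * (d * d * d)) * (3 * (m * m) * (d * d * d))) with 8 by (field; nra).
  replace (Rabs (hann_int m mu) * (3 * (m * m) * (d * d * d)))
    with (4 * (Rabs (hann_int m mu) * (3 / 4 * (d * d * d)) * (m * m))) by field.
  lra.
Qed.

Lemma kernel_hat_combination_le l w1 w2 B : Rabs w1 <= B -> Rabs w2 <= B ->
  Rabs (- (l * l / 2) * (w1 + w2)) <= l * l * B /\ Rabs (- (l * l / 2) * (w1 - w2)) <= l * l * B.
Proof.
  intros H1 H2. assert (0 <= l * l / 2) by (apply Rmult_le_pos; nra).
  rewrite !Rabs_mult, Rabs_Ropp, Rabs_right by lra.
  assert (Rabs (w1 + w2) <= 2 * B) by (eapply Rle_trans; [apply Rabs_triang | lra]).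
  assert (Rabs (w1 - w2) <= 2 * B) by (eapply Rle_trans; [apply Rabs_triang | rewrite Rabs_Ropp; lra]).
  split; (eapply Rle_trans; [apply Rmult_le_compat_l; eauto | right; field]).
Qed.

Lemma kernel_hat_low l d : 2 / m <= d -> 0 <= l -> d <= 1 - l ->
  Rabs (kcos_hat m l) <= hat_const d * (l * l) /\ Rabs (ksin_hat m l) <= hat_const d * (l * l).
Proof.
  intros Hd Hl Hld. destruct (kernel_hat_hann m Hm l) as [-> ->].
  assert (d0 : 0 < d) by (apply Rlt_le_trans with (2 / m); auto; apply Rdiv_lt_0_compat; lra).
  rewrite (Rmult_comm (hat_const d)).
  apply kernel_hat_combination_le; apply hann_int_abs_le; auto.
  - rewrite Rabs_left1; lra.
  - rewrite Rabs_right; lra.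
Qed.

Lemma kernel_hat_high l d : 2 / m <= d -> 0 < l -> d * l <= l - 1 ->
  Rabs (kcos_hat m l) <= hat_const d / l /\ Rabs (ksin_hat m l) <= hat_const d / l.
Proof.
  intros Hd Hl Hld. destruct (kernel_hat_hann m Hm l) as [-> ->].
  assert (d0 : 0 < d) by (apply Rlt_le_trans with (2 / m); auto; apply Rdiv_lt_0_compat; lra).
  assert (l1 : 1 <= l) by nra.
  replace (hat_const d / l) with (l * l * hat_const (d * l)) by (unfold hat_const; field; repeat split; lra).
  apply kernel_hat_combination_le; apply hann_int_abs_le; try nra.
  - rewrite Rabs_right; lra.
  - rewrite Rabs_right; nra.
Qed.

Lemma kernel_hat_1 : width m - 1 <= Rabs (kcos_hat m 1) /\ width m - 1 <= Rabs (ksin_hat m 1).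
Proof.
  destruct (kernel_hat_hann m Hm 1) as [-> ->].
  replace (1 - 1) with 0 by ring. replace (1 + 1) with 2 by ring. rewrite hann_int_0.
  assert (H2 : Rabs (hann_int m 2) <= hat_const 2).
  { apply hann_int_abs_le; [|rewrite Rabs_right; lra].
    apply Rmult_le_reg_r with m; [lra|]. unfold Rdiv. rewrite Rmult_assoc, Rinv_l; lra. }
  assert (hat_const 2 <= 1).
  { unfold hat_const. apply Rmult_le_reg_r with (3 * (m * m) * (2 * 2 * 2)); [nra|].
    unfold Rdiv. rewrite Rmult_assoc, Rinv_l by nra. nra. }
  assert (4 <= width m) by (unfold width; assert (H5 := PI2_1); nra).
  destruct (Rabs_def2 _ _ (Rle_lt_trans _ _ (1 + 1) H2 ltac:(lra))).
  rewrite !Rabs_mult, Rabs_Ropp, !Rabs_right by lra. lra.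
Qed.

Lemma kernel_abs_le s : Rabs (kcos m s) <= 4 /\ Rabs (ksin m s) <= 4.
Proof.
  assert (0 < / m <= / 2) by (split; [apply Rinv_0_lt_compat | apply Rinv_le_contravar]; lra).
  assert (0 <= nu_p m ^ 2 <= 9 / 4) by (unfold nu_p; split; nra).
  assert (0 <= nu_m m ^ 2 <= 1) by (unfold nu_m; split; nra).
  unfold kcos, ksin.
  destruct (COS_bound (1 * s)), (COS_bound (nu_p m * s)), (COS_bound (nu_m m * s)).
  destruct (SIN_bound (1 * s)), (SIN_bound (nu_p m * s)), (SIN_bound (nu_m m * s)).
  split; apply Rabs_le; split; nra.
Qed.

End Kernel.

(** * Pairing the series with a kernel *)

Lemma is_RInt_trig_poly (K Fc Fs : R -> R) a b
  (Hc : forall l, is_RInt (fun s => K s * cos (l * s)) a b (Fc l))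
  (Hs : forall l, is_RInt (fun s => K s * sin (l * s)) a b (Fs l))
  (x y lam : nat -> R) N :
  is_RInt (fun s => K s * sum_f_R0 (fun j => x j * cos (lam j * s) - y j * sin (lam j * s)) N) a b
    (sum_f_R0 (fun j => x j * Fc (lam j) - y j * Fs (lam j)) N).
Proof.
  assert (Hj : forall j, is_RInt (fun s => K s * (x j * cos (lam j * s) - y j * sin (lam j * s))) a b
                 (x j * Fc (lam j) - y j * Fs (lam j))).
  { intro j. apply is_RInt_eq with
      (fun s => x j * (K s * cos (lam j * s)) + (- y j) * (K s * sin (lam j * s))); [intro; field|].
    replace (x j * Fc (lam j) - y j * Fs (lam j)) with (x j * Fc (lam j) + (- y j) * Fs (lam j)) by field.
    apply is_RInt_lin2; auto. }
  induction N as [|N IH]; [apply Hj|]. simpl.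
  apply is_RInt_eq with (fun s => 1 * (K s * sum_f_R0 (fun j => x j * cos (lam j * s) - y j * sin (lam j * s)) N)
      + 1 * (K s * (x (S N) * cos (lam (S N) * s) - y (S N) * sin (lam (S N) * s)))); [intro; field|].
  match goal with |- is_RInt _ _ _ (?u + ?v) => replace (u + v) with (1 * u + 1 * v) by field end.
  apply is_RInt_lin2; auto.
Qed.

(* As [K] is orthogonal to [1] and [s], pairing it with [s |-> g (t0 + s / beta)] only sees the
   error [g (t0 + h) - g t0 - D h]; [r] bounds the remainder of the series. *)
Lemma kernel_pairing_le (K Fc Fs : R -> R) S Kmax (HS : 0 < S)
  (HK : forall s, Rabs (K s) <= Kmax)
  (Hc : forall l, is_RInt (fun s => K s * cos (l * s)) (- S) S (Fc l))
  (Hs : forall l, is_RInt (fun s => K s * sin (l * s)) (- S) S (Fs l))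
  (H1 : is_RInt K (- S) S 0) (Hx : is_RInt (fun s => K s * s) (- S) S 0)
  ax ay b (g : R -> R) t0 D eps eta beta r N
  (Heps : 0 <= eps) (Hbeta : 0 < beta) (Hsb : S / beta < eta)
  (Hd : forall h, Rabs h < eta -> Rabs (g (t0 + h) - g t0 - D * h) <= eps * Rabs h)
  (Hr : forall h, Rabs (g (t0 + h) - sum_f_R0 (term_re ax ay b (t0 + h)) N) <= r) :
  Rabs (sum_f_R0 (fun j => term_re ax ay b t0 j * Fc (b j / beta) - term_im ax ay b t0 j * Fs (b j / beta)) N)
   <= 2 * S * (Kmax * (eps * (S / beta) + 2 * r)).
Proof.
  set (x := term_re ax ay b t0). set (y := term_im ax ay b t0).
  set (lam := fun j => b j / beta).
  set (T := fun s => sum_f_R0 (fun j => x j * cos (lam j * s) - y j * sin (lam j * s)) N).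
  set (c0 := sum_f_R0 x N).
  assert (HT := is_RInt_trig_poly K Fc Fs (- S) S Hc Hs x y lam N).
  assert (HI : is_RInt (fun s => K s * (T s - c0 - D / beta * s)) (- S) S
     (1 * sum_f_R0 (fun j => x j * Fc (lam j) - y j * Fs (lam j)) N + (- c0) * 0 + (- (D / beta)) * 0)).
  { apply is_RInt_eq with (fun s => 1 * (K s * T s) + (- c0) * K s + (- (D / beta)) * (K s * s));
      [intro; field; lra | apply is_RInt_lin3; [exact HT | exact H1 | exact Hx]]. }
  replace (1 * sum_f_R0 (fun j => x j * Fc (lam j) - y j * Fs (lam j)) N + (- c0) * 0 + (- (D / beta)) * 0)
    with (sum_f_R0 (fun j => x j * Fc (lam j) - y j * Fs (lam j)) N) in HI by (field; lra).
  replace (2 * S) with (S - - S) by field.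
  eapply (@norm_RInt_le_const R_NormedModule); [lra | | exact HI].
  intros s Hs0. set (h := s / beta).
  assert (HP : forall h, sum_f_R0 (term_re ax ay b (t0 + h)) N =
                         sum_f_R0 (fun j => x j * cos (b j * h) - y j * sin (b j * h)) N).
  { intros h0. apply sum_eq. intros i _. apply term_re_shift. }
  assert (HTs : T s = sum_f_R0 (term_re ax ay b (t0 + h)) N).
  { rewrite HP. apply sum_eq. intros i _. unfold lam, h.
    replace (b i / beta * s) with (b i * (s / beta)) by (field; lra). reflexivity. }
  assert (Hc0 : c0 = sum_f_R0 (term_re ax ay b t0) N) by reflexivity.
  assert (Hh : Rabs h <= S / beta).
  { unfold h, Rdiv. rewrite Rabs_mult, Rabs_inv, (Rabs_right beta) by lra.
    apply Rmult_le_compat_r; [left; apply Rinv_0_lt_compat; lra | apply Rabs_le; lra]. }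
  assert (HQ : Rabs (T s - c0 - D / beta * s) <= eps * (S / beta) + 2 * r).
  { replace (D / beta * s) with (D * h) by (unfold h; field; lra).
    rewrite HTs, Hc0.
    assert (E1 := Hd h ltac:(lra)). assert (E2 := Hr h). assert (E3 := Hr 0).
    rewrite Rplus_0_r in E3.
    assert (eps * Rabs h <= eps * (S / beta)) by (apply Rmult_le_compat_l; auto).
    replace (sum_f_R0 (term_re ax ay b (t0 + h)) N - sum_f_R0 (term_re ax ay b t0) N - D * h) with
      ((g (t0 + h) - g t0 - D * h) - (g (t0 + h) - sum_f_R0 (term_re ax ay b (t0 + h)) N)
       + (g t0 - sum_f_R0 (term_re ax ay b t0) N)) by field.
    eapply Rle_trans; [apply Rabs_triang|].
    eapply Rle_trans; [apply Rplus_le_compat_r, Rabs_triang|].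
    rewrite Rabs_Ropp. lra. }
  cbv beta. rewrite Rabs_mult. apply Rmult_le_compat; auto using Rabs_pos.
Qed.

(** * Lacunary sums *)

Fixpoint sum_lt (f : nat -> R) (n : nat) : R :=
  match n with O => 0 | S k => sum_lt f k + f k end.

Lemma sum_lt_ge0 f (H : forall j, 0 <= f j) n : 0 <= sum_lt f n.
Proof. induction n; simpl; [lra | specialize (H n); lra]. Qed.

Lemma sum_f_R0_telescope_le (tau Phi : nat -> R) N :
  (forall j, (j <= N)%nat -> tau j <= Phi (S j) - Phi j) -> sum_f_R0 tau N <= Phi (S N) - Phi O.
Proof.
  induction N; intros H; simpl; [apply H; lia|].
  assert (IH := IHN (fun j Hj => H j ltac:(lia))). specialize (H (S N) (le_n _)). lra.
Qed.

Lemma sum_f_R0_isolate (u : nat -> R) n N : (n <= N)%nat ->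
  sum_f_R0 u N = u n + sum_f_R0 (fun j => if (j =? n)%nat then 0 else u j) N.
Proof.
  induction N; intros H.
  - replace n with O by lia. simpl. ring.
  - destruct (Nat.eq_dec n (S N)) as [->|ne].
    + simpl. rewrite Nat.eqb_refl.
      rewrite (sum_eq (fun j => if (j =? S N)%nat then 0 else u j) u N); [ring|].
      intros i Hi. destruct (Nat.eqb_spec i (S N)); [lia | auto].
    + rewrite !tech5, (IHN ltac:(lia)). cbv beta.
      replace (S N =? n)%nat with false by (symmetry; apply Nat.eqb_neq; lia). ring.
Qed.

Lemma sum_f_R0_scal_l (c : R) (u : nat -> R) N :
  sum_f_R0 (fun j => c * u j) N = c * sum_f_R0 u N.
Proof. rewrite scal_sum. apply sum_eq. intros; ring. Qed.

Lemma Rabs_sum_isolate_ge (u : nat -> R) n N : (n <= N)%nat ->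
  Rabs (u n) <= Rabs (sum_f_R0 u N)
                + sum_f_R0 (fun j => if (j =? n)%nat then 0 else Rabs (u j)) N.
Proof.
  intros H. rewrite (sum_f_R0_isolate u n N H).
  set (v := fun j => if (j =? n)%nat then 0 else u j).
  assert (Hv : Rabs (sum_f_R0 v N) <= sum_f_R0 (fun j => if (j =? n)%nat then 0 else Rabs (u j)) N).
  { eapply Rle_trans; [apply sum_f_R0_triangle|]. apply sum_Rle. intros j _.
    unfold v. destruct (j =? n)%nat; [rewrite Rabs_R0|]; lra. }
  assert (Rabs (u n) <= Rabs (u n + sum_f_R0 v N) + Rabs (sum_f_R0 v N)).
  { replace (u n) with ((u n + sum_f_R0 v N) - sum_f_R0 v N) at 1 by ring.
    unfold Rminus. rewrite <- (Rabs_Ropp (sum_f_R0 v N)). apply Rabs_triang. }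
  lra.
Qed.

Lemma le_of_le_plus_cv_0 X Y c (r : nat -> R) n : 0 <= c -> Un_cv r 0 ->
  (forall N, (n <= N)%nat -> X <= Y + c * r N) -> X <= Y.
Proof.
  intros Hc Hr H.
  destruct (Rle_or_lt X Y) as [h|h]; [exact h|exfalso].
  destruct (Hr ((X - Y) / (c + 1))) as [N1 HN1]; [apply Rdiv_lt_0_compat; lra|].
  specialize (HN1 (N1 + n)%nat ltac:(lia)). specialize (H (N1 + n)%nat ltac:(lia)).
  unfold R_dist in HN1. rewrite Rminus_0_r in HN1.
  set (e := r (N1 + n)%nat) in *.
  assert (Hle : c * e <= (c + 1) * Rabs e) by (assert (e <= Rabs e) by apply Rle_abs;
    assert (0 <= Rabs e) by apply Rabs_pos; nra).
  assert ((c + 1) * Rabs e < X - Y).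
  { apply Rmult_lt_reg_r with (/ (c + 1)); [apply Rinv_0_lt_compat; lra|].
    replace ((c + 1) * Rabs e * / (c + 1)) with (Rabs e) by (field; lra). exact HN1. }
  lra.
Qed.

Lemma argmax_from (A : nat -> R) (HA0 : forall j, 0 <= A j) (HA : Un_cv A 0) N0 :
  exists n, (N0 <= n)%nat /\ forall j, (N0 <= j)%nat -> A j <= A n.
Proof.
  assert (Hfin : forall L, exists n, (N0 <= n)%nat /\ forall j, (N0 <= j <= L)%nat -> A j <= A n).
  { induction L as [|L [n [H1 H2]]].
    - exists N0. split; [lia|]. intros j Hj. replace j with N0 by lia. lra.
    - destruct (Rle_or_lt (A (S L)) (A n)) as [h|h].
      + exists n. split; [lia|]. intros j Hj.
        destruct (Nat.eq_dec j (S L)); [subst; auto | apply H2; lia].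
      + destruct (Nat.le_gt_cases N0 (S L)) as [hl|hl].
        * exists (S L). split; [lia|]. intros j Hj.
          destruct (Nat.eq_dec j (S L)); [subst; lra|].
          assert (A j <= A n) by (apply H2; lia). lra.
        * exists n. split; [lia|]. intros j Hj. lia. }
  destruct (classic (exists j0, (N0 <= j0)%nat /\ 0 < A j0)) as [[j0 [Hj0 Hpos]]|Hno].
  - destruct (HA (A j0) Hpos) as [L HL].
    destruct (Hfin (max L j0)) as [n [H1 H2]].
    exists n. split; auto. intros j Hj.
    destruct (Nat.le_gt_cases j (max L j0)) as [h|h]; [apply H2; lia|].
    specialize (HL j ltac:(lia)). unfold R_dist in HL. rewrite Rminus_0_r in HL.
    assert (A j0 <= A n) by (apply H2; lia).
    assert (A j <= Rabs (A j)) by apply Rle_abs. lra.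
  - exists N0. split; auto. intros j Hj.
    assert (~ (0 < A j)) by (intro; apply Hno; exists j; auto).
    specialize (HA0 N0). lra.
Qed.

Lemma eventually_le_twice_of_contraction (u : nat -> R) us th N0 :
  0 < us -> 0 <= th < 1 -> (forall N, (N0 <= N)%nat -> u (S N) - us <= th * (u N - us)) ->
  exists N2, forall N, (N2 <= N)%nat -> u N <= 2 * us.
Proof.
  intros Hus Hth Hstep.
  set (M := Rabs (u N0 - us)). assert (HM : 0 <= M) by apply Rabs_pos.
  assert (Hiter : forall k, u (N0 + k)%nat - us <= th ^ k * M).
  { induction k.
    - rewrite Nat.add_0_r. simpl. rewrite Rmult_1_l. apply Rle_abs.
    - rewrite Nat.add_succ_r. eapply Rle_trans; [apply Hstep; lia|].
      simpl. rewrite Rmult_assoc. apply Rmult_le_compat_l; lra. }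
  destruct (pow_lt_1_zero th ltac:(rewrite Rabs_right; lra) (us / (M + 1))) as [k0 Hk0].
  { apply Rdiv_lt_0_compat; lra. }
  exists (N0 + k0)%nat. intros N HN.
  replace N with (N0 + (N - N0))%nat by lia.
  assert (Hk := Hiter (N - N0)%nat).
  specialize (Hk0 (N - N0)%nat ltac:(lia)).
  assert (Hp : 0 <= th ^ (N - N0)) by (apply pow_le; lra).
  rewrite Rabs_right in Hk0 by lra.
  assert (th ^ (N - N0) * (M + 1) < us).
  { apply Rmult_lt_reg_r with (/ (M + 1)); [apply Rinv_0_lt_compat; lra|].
    replace (th ^ (N - N0) * (M + 1) * / (M + 1)) with (th ^ (N - N0)) by (field; lra). exact Hk0. }
  nra.
Qed.

Section Lacunary.

Variables (b : nat -> R) (q : R) (Nq : nat).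
Hypothesis Hpos : forall j, 0 < b j.
Hypothesis Hinc : forall j, b j < b (S j).
Hypothesis Hq1 : 1 < q.
Hypothesis Hq : forall j, (Nq <= j)%nat -> q * b j <= b (S j).

Lemma lac_le i j : (i <= j)%nat -> b i <= b j.
Proof. intros H. induction H; [lra | specialize (Hinc m); lra]. Qed.

Lemma lac_gap i j : (Nq <= i)%nat -> (i < j)%nat -> q * b i <= b j.
Proof. intros H1 H2. specialize (Hq i H1). assert (H := lac_le (S i) j H2). lra. Qed.

Lemma lac_low_increment_le C Aj An j n : 0 <= C -> 0 <= Aj -> Aj <= An ->
  (Nq <= j)%nat -> (j < n)%nat ->
  2 * C * Aj * (b j * b j) / b n <= 2 * C * (An * b n) / (q - 1) * (b (S j) - b j) / b n.
Proof.
  intros HC HAj HAjn Hj Hjn.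
  assert (Hbj := Hpos j). assert (Hbn := Hpos n). assert (Hbjn := lac_le j n ltac:(lia)).
  assert (Hqj := Hq j Hj).
  unfold Rdiv. apply Rmult_le_compat_r; [left; apply Rinv_0_lt_compat; lra|].
  apply Rmult_le_reg_r with (q - 1); [lra|].
  replace (2 * C * (An * b n) * / (q - 1) * (b (S j) - b j) * (q - 1))
    with (2 * C * An * (b n * (b (S j) - b j))) by (field; lra).
  assert (b j * b j * (q - 1) <= b j * (b (S j) - b j)).
  { replace (b j * b j * (q - 1)) with (b j * ((q - 1) * b j)) by ring.
    apply Rmult_le_compat_l; lra. }
  assert (b j * (b (S j) - b j) <= b n * (b (S j) - b j)) by (apply Rmult_le_compat_r; nra).
  replace (2 * C * Aj * (b j * b j) * (q - 1)) with (2 * C * Aj * (b j * b j * (q - 1))) by ring.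
  apply Rmult_le_compat; nra.
Qed.

Lemma lac_high_increment_le C Aj An n j : 0 <= C -> 0 <= Aj -> Aj <= An ->
  (Nq <= n)%nat -> (n < j)%nat ->
  2 * C * Aj * (b n * b n) / b j <= 2 * C * (An * b n) / (q - 1) * b n * (/ b (pred j) - / b j).
Proof.
  intros HC HAj HAjn Hn Hnj.
  assert (Hbj := Hpos j). assert (Hbjm := Hpos (pred j)). assert (Hbn := Hpos n).
  assert (Hqj := Hq (pred j) ltac:(lia)). replace (S (pred j)) with j in Hqj by lia.
  apply Rmult_le_reg_r with (b j * b (pred j) * (q - 1)); [apply Rmult_lt_0_compat; nra|].
  replace (2 * C * Aj * (b n * b n) / b j * (b j * b (pred j) * (q - 1)))
    with (2 * C * Aj * (b n * b n) * (b (pred j) * (q - 1))) by (field; lra).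
  replace (2 * C * (An * b n) / (q - 1) * b n * (/ b (pred j) - / b j) * (b j * b (pred j) * (q - 1)))
    with (2 * C * An * (b n * b n) * (b j - b (pred j))) by (field; lra).
  assert (0 <= b n * b n) by nra.
  apply Rmult_le_compat; try nra; [repeat apply Rmult_le_pos; lra|].
  apply Rmult_le_compat_r; [lra|]. apply Rmult_le_compat_l; lra.
Qed.

(* Telescoping potential for [off_diagonal_sum_le]: the terms below [n] are dominated by the
   increments of [b], those above [n] by the increments of [- / b], because lacunarity gives
   [(q - 1) * b j <= b (S j) - b j]. *)
Definition lac_potential (P : nat -> R) (K : R) (N0 n j : nat) : R :=
  if (j <=? N0)%nat then P j
  else if (j <=? n)%nat then P N0 + K * (b j - b N0) / b n
  else P N0 + K * (b n - b N0) / b n + K * b n * (/ b n - / b (pred j)).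

Lemma lac_potential_range_le P K N0 n N : 0 <= K -> (N0 <= n)%nat -> (n <= N)%nat ->
  lac_potential P K N0 n (S N) - lac_potential P K N0 n O <= P N0 - P O + 2 * K.
Proof.
  intros HK HN0n HnN. unfold lac_potential.
  replace (S N <=? N0)%nat with false by (symmetry; apply Nat.leb_gt; lia).
  replace (S N <=? n)%nat with false by (symmetry; apply Nat.leb_gt; lia).
  replace (0 <=? N0)%nat with true by (symmetry; apply Nat.leb_le; lia).
  simpl pred.
  assert (Hbn := Hpos n). assert (HbN := Hpos N).
  assert (HbN0n := lac_le N0 n HN0n). assert (HbnN := lac_le n N HnN). assert (HbN0 := Hpos N0).
  assert (K * (b n - b N0) / b n <= K).
  { replace (K * (b n - b N0) / b n) with (K * (1 - b N0 / b n)) by (field; lra).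
    rewrite <- (Rmult_1_r K) at 2. apply Rmult_le_compat_l; auto.
    assert (0 <= b N0 / b n) by (apply Rmult_le_pos; [lra | left; apply Rinv_0_lt_compat; auto]). lra. }
  assert (K * b n * (/ b n - / b N) <= K).
  { replace (K * b n * (/ b n - / b N)) with (K * (1 - b n / b N)) by (field; lra).
    rewrite <- (Rmult_1_r K) at 2. apply Rmult_le_compat_l; auto.
    assert (0 <= b n / b N) by (apply Rmult_le_pos; [lra | left; apply Rinv_0_lt_compat; auto]). lra. }
  lra.
Qed.

Lemma off_diagonal_sum_le (A tau : nat -> R) C N0 n N :
  0 <= C -> (forall j, 0 <= A j) -> (Nq < N0)%nat -> (N0 <= n)%nat -> (n <= N)%nat ->
  (forall j, (N0 <= j)%nat -> A j <= A n) ->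
  (forall j, (j < n)%nat -> tau j <= 2 * C * A j * (b j * b j) / b n) ->
  tau n <= 0 ->
  (forall j, (n < j)%nat -> tau j <= 2 * C * A j * (b n * b n) / b j) ->
  sum_f_R0 tau N <=
    2 * C * sum_lt (fun i => A i * b i * b i) N0 / b N0 + 4 * C * (A n * b n) / (q - 1).
Proof.
  intros HC HA0 HN0 HN0n HnN Hmax Hlow Hdiag Hhigh.
  assert (Hbn := Hpos n). assert (HbN0 := Hpos N0). assert (HbN0n := lac_le N0 n HN0n).
  set (f := fun i => A i * b i * b i).
  set (K := 2 * C * (A n * b n) / (q - 1)).
  assert (HK : 0 <= K).
  { unfold K. specialize (HA0 n). apply Rmult_le_pos; [|left; apply Rinv_0_lt_compat; lra].
    apply Rmult_le_pos; [lra | apply Rmult_le_pos; lra]. }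
  set (P := fun j => 2 * C / b N0 * sum_lt f j).
  set (Phi := lac_potential P K N0 n).
  assert (Htel : sum_f_R0 tau N <= Phi (S N) - Phi O).
  { apply sum_f_R0_telescope_le. intros j Hj.
    destruct (Nat.lt_total j n) as [Hjn|[Hjn|Hjn]].
    - eapply Rle_trans; [apply Hlow; auto|]. unfold Phi, lac_potential.
      destruct (Nat.leb_spec (S j) N0) as [h|h].
      + replace (j <=? N0)%nat with true by (symmetry; apply Nat.leb_le; lia).
        unfold P. simpl sum_lt.
        replace (2 * C / b N0 * (sum_lt f j + f j) - 2 * C / b N0 * sum_lt f j)
          with (2 * C * f j / b N0) by (field; lra).
        assert (Hbj := Hpos j). specialize (HA0 j).
        replace (2 * C * f j) with (2 * C * A j * (b j * b j)) by (unfold f; ring).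
        unfold Rdiv. apply Rmult_le_compat_l; [apply Rmult_le_pos; nra|].
        apply Rinv_le_contravar; [auto | apply lac_le; lia].
      + replace (S j <=? n)%nat with true by (symmetry; apply Nat.leb_le; lia).
        eapply Rle_trans; [apply lac_low_increment_le; [exact HC | apply HA0 | apply Hmax; lia | lia | lia]|].
        fold K. right.
        destruct (Nat.leb_spec j N0) as [h'|h'].
        * replace j with N0 by lia. field. lra.
        * replace (j <=? n)%nat with true by (symmetry; apply Nat.leb_le; lia). field. lra.
    - subst j. eapply Rle_trans; [exact Hdiag|]. unfold Phi, lac_potential.
      replace (S n <=? N0)%nat with false by (symmetry; apply Nat.leb_gt; lia).
      replace (S n <=? n)%nat with false by (symmetry; apply Nat.leb_gt; lia).
      simpl pred. destruct (Nat.leb_spec n N0) as [h|h].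
      + replace n with N0 by lia. right. field. lra.
      + replace (n <=? n)%nat with true by (symmetry; apply Nat.leb_le; lia). right. field. lra.
    - eapply Rle_trans; [apply Hhigh; auto|].
      eapply Rle_trans; [apply lac_high_increment_le; [exact HC | apply HA0 | apply Hmax; lia | lia | lia]|]. fold K.
      unfold Phi, lac_potential.
      replace (S j <=? N0)%nat with false by (symmetry; apply Nat.leb_gt; lia).
      replace (S j <=? n)%nat with false by (symmetry; apply Nat.leb_gt; lia).
      replace (j <=? N0)%nat with false by (symmetry; apply Nat.leb_gt; lia).
      replace (j <=? n)%nat with false by (symmetry; apply Nat.leb_gt; lia).
      simpl pred. right. ring. }
  assert (HPhi := lac_potential_range_le P K N0 n N HK HN0n HnN). fold Phi in HPhi.
  assert (HP0 : P O = 0) by (unfold P; simpl; ring).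
  replace (2 * C * sum_lt f N0 / b N0) with (P N0) by (unfold P; field; lra).
  replace (4 * C * (A n * b n) / (q - 1)) with (2 * K) by (unfold K; field; lra).
  lra.
Qed.

(* A Gronwall-type inequality: with [u N := sum_lt (c * b) N / b N], lacunarity turns the
   hypothesis into [u (S N) - us <= (1 + rho) / q * (u N - us)] for [us := alpha / (q - 1 - rho)]. *)
Lemma lacunary_recursion_le (c : nat -> R) rho alpha N1 :
  (forall j, 0 <= c j) -> 0 <= rho <= (q - 1) / 2 -> 0 < alpha ->
  (forall N, (N1 <= N)%nat -> c N <= alpha + rho * (sum_lt (fun i => c i * b i) N / b N)) ->
  exists N2, forall N, (N2 <= N)%nat -> c N <= 3 * alpha.
Proof.
  intros Hc0 Hrho Ha Hrec.
  set (u := fun N => sum_lt (fun i => c i * b i) N / b N).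
  set (th := (1 + rho) / q).
  set (us := alpha / (q - 1 - rho)).
  assert (Hus : 0 < us) by (unfold us; apply Rdiv_lt_0_compat; lra).
  assert (Hus2 : rho * (2 * us) <= 2 * alpha).
  { unfold us. apply Rmult_le_reg_r with (q - 1 - rho); [lra|].
    replace (rho * (2 * (alpha / (q - 1 - rho))) * (q - 1 - rho)) with (2 * alpha * rho) by (field; lra).
    nra. }
  assert (Hth : 0 <= th < 1).
  { unfold th. split; [apply Rmult_le_pos; [lra | left; apply Rinv_0_lt_compat; lra]|].
    apply Rmult_lt_reg_r with q; [lra|]. unfold Rdiv. rewrite Rmult_assoc, Rinv_l; lra. }
  assert (Hstep : forall N, (max N1 Nq <= N)%nat -> u (S N) - us <= th * (u N - us)).
  { intros N HN. unfold u. simpl sum_lt.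
    assert (HcN := Hrec N ltac:(lia)). assert (HqN := Hq N ltac:(lia)).
    assert (HbN := Hpos N). assert (HbS := Hpos (S N)).
    set (TN := sum_lt (fun i => c i * b i) N) in *.
    assert (HT0 : 0 <= TN) by (apply sum_lt_ge0; intro i; specialize (Hc0 i); specialize (Hpos i); nra).
    assert (HuN : 0 <= TN / b N) by (apply Rmult_le_pos; [lra | left; apply Rinv_0_lt_compat; lra]).
    assert (E1 : TN + c N * b N <= ((1 + rho) * (TN / b N) + alpha) * b N).
    { replace (((1 + rho) * (TN / b N) + alpha) * b N) with (TN + (alpha + rho * (TN / b N)) * b N)
        by (field; lra).
      assert (c N * b N <= (alpha + rho * (TN / b N)) * b N) by (apply Rmult_le_compat_r; lra). lra. }
    assert (E2 : (TN + c N * b N) / b (S N) <= ((1 + rho) * (TN / b N) + alpha) / q).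
    { apply Rle_trans with (((1 + rho) * (TN / b N) + alpha) * b N / b (S N)).
      - unfold Rdiv. apply Rmult_le_compat_r; [left; apply Rinv_0_lt_compat|]; lra.
      - apply Rmult_le_reg_r with (q * b (S N)); [nra|].
        replace (((1 + rho) * (TN / b N) + alpha) * b N / b (S N) * (q * b (S N)))
          with (((1 + rho) * (TN / b N) + alpha) * (q * b N)) by (field; lra).
        replace (((1 + rho) * (TN / b N) + alpha) / q * (q * b (S N)))
          with (((1 + rho) * (TN / b N) + alpha) * b (S N)) by (field; lra).
        apply Rmult_le_compat_l; nra. }
    assert (E3 : ((1 + rho) * (TN / b N) + alpha) / q - us = th * (TN / b N - us)).
    { unfold th, us. field. lra. }
    lra. }
  destruct (eventually_le_twice_of_contraction u us th (max N1 Nq) Hus Hth Hstep) as [N2 HN2].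
  exists (max N2 N1). intros N HN.
  assert (Hu := HN2 N ltac:(lia)). assert (HR := Hrec N ltac:(lia)). fold (u N) in HR.
  assert (rho * u N <= rho * (2 * us)) by (apply Rmult_le_compat_l; lra).
  lra.
Qed.

End Lacunary.

Lemma diagonal_coefficient_le (x y A lam : nat -> R) (E Od : R -> R) kap M n N :
  (forall j, Rabs (x j) <= A j /\ Rabs (y j) <= A j) -> A n <= Rabs (x n) + Rabs (y n) ->
  0 <= kap -> kap <= Rabs (E 1) -> kap <= Rabs (Od 1) -> lam n = 1 -> (n <= N)%nat ->
  Rabs (sum_f_R0 (fun j => x j * E (lam j)) N) <= M ->
  Rabs (sum_f_R0 (fun j => y j * Od (lam j)) N) <= M ->
  kap * A n <= 2 * M + sum_f_R0 (fun j =>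
    if (j =? n)%nat then 0 else A j * (Rabs (E (lam j)) + Rabs (Od (lam j)))) N.
Proof.
  intros Hxy HAn Hk HE HO Hlam HnN Ix Iy.
  assert (Jx := Rabs_sum_isolate_ge (fun j => x j * E (lam j)) n N HnN).
  assert (Jy := Rabs_sum_isolate_ge (fun j => y j * Od (lam j)) n N HnN).
  cbv beta in Jx, Jy. rewrite Hlam, Rabs_mult in Jx, Jy.
  assert (Hoff : sum_f_R0 (fun j => if (j =? n)%nat then 0 else Rabs (x j * E (lam j))) N
               + sum_f_R0 (fun j => if (j =? n)%nat then 0 else Rabs (y j * Od (lam j))) N
               <= sum_f_R0 (fun j => if (j =? n)%nat then 0
                                     else A j * (Rabs (E (lam j)) + Rabs (Od (lam j)))) N).
  { rewrite <- plus_sum. apply sum_Rle. intros j _. destruct (j =? n)%nat; [lra|].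
    destruct (Hxy j) as [hx hy]. rewrite !Rabs_mult.
    assert (Rabs (x j) * Rabs (E (lam j)) <= A j * Rabs (E (lam j)))
      by (apply Rmult_le_compat_r; auto using Rabs_pos).
    assert (Rabs (y j) * Rabs (Od (lam j)) <= A j * Rabs (Od (lam j)))
      by (apply Rmult_le_compat_r; auto using Rabs_pos).
    lra. }
  assert (kap * Rabs (x n) <= Rabs (x n) * Rabs (E 1))
    by (rewrite Rmult_comm; apply Rmult_le_compat_l; auto using Rabs_pos).
  assert (kap * Rabs (y n) <= Rabs (y n) * Rabs (Od 1))
    by (rewrite Rmult_comm; apply Rmult_le_compat_l; auto using Rabs_pos).
  assert (kap * A n <= kap * Rabs (x n) + kap * Rabs (y n))
    by (rewrite <- Rmult_plus_distr_l; apply Rmult_le_compat_l; auto).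
  lra.
Qed.

(** * Decay of the coefficients *)

Lemma kernel_scale_exists q : 1 < q -> exists m,
  2 <= m /\ 2 / m <= 1 - / q /\ 4 * hat_const m (1 - / q) / (q - 1) <= (width m - 1) / 2.
Proof.
  intros Hq. set (d := 1 - / q).
  assert (Hiq : 0 < / q < 1).
  { split; [apply Rinv_0_lt_compat; lra | rewrite <- Rinv_1; apply Rinv_lt_contravar; lra]. }
  assert (Hd : 0 < d <= 1) by (unfold d; lra).
  assert (Hqd : d <= q - 1) by (unfold d; assert (q * / q = 1) by (field; lra); nra).
  set (D4 := d * d * d * d).
  assert (HD4 : 0 < D4 <= d).
  { unfold D4. split; [repeat apply Rmult_lt_0_compat; lra|].
    assert (d * d <= d) by nra. assert (d * d * d <= d * d) by nra. nra. }
  destruct (archimed (64 / D4 + 2)) as [Hm _]. set (m := IZR (up (64 / D4 + 2))) in *.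
  exists m.
  assert (H64 : 0 < 64 / D4) by (apply Rdiv_lt_0_compat; lra).
  assert (Hm2 : 2 <= m) by lra.
  assert (HmD : 64 <= m * D4) by (assert (64 / D4 * D4 = 64) by (field; lra); nra).
  assert (Hmd : 64 <= m * d) by nra.
  assert (HPI := PI2_1).
  split; [auto | split].
  - apply Rmult_le_reg_r with m; [lra|]. unfold Rdiv. rewrite Rmult_assoc, Rinv_l by lra. nra.
  - unfold hat_const, width.
    assert (Hdd : 0 < d * d * d) by (repeat apply Rmult_lt_0_compat; lra).
    apply Rle_trans with (m / 2); [|nra].
    apply Rmult_le_reg_r with (3 * (m * m) * (d * d * d) * (q - 1)).
    { repeat apply Rmult_lt_0_compat; nra. }
    replace (4 * (8 / (3 * (m * m) * (d * d * d))) / (q - 1) * (3 * (m * m) * (d * d * d) * (q - 1)))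
      with 32 by (field; repeat split; nra).
    assert (64 <= m * (d * d * d) * (q - 1)).
    { assert (D4 <= d * d * d * (q - 1)) by (unfold D4; apply Rmult_le_compat_l; lra).
      assert (m * D4 <= m * (d * d * d * (q - 1))) by (apply Rmult_le_compat_l; lra). nra. }
    replace (m / 2 * (3 * (m * m) * (d * d * d) * (q - 1)))
      with (3 / 2 * (m * m) * (m * (d * d * d) * (q - 1))) by field.
    nra.
Qed.

Section LocalApproximation.

Variables (ax ay b : nat -> R) (g : R -> R) (l q : R) (Nq : nat) (m : R).
Hypothesis Hsum : Un_cv (sum_f_R0 (fun j => cmod (ax j) (ay j))) l.
Hypothesis Hpos : forall j, 0 < b j.
Hypothesis Hinc : forall j, b j < b (S j).
Hypothesis Hg : forall t, Un_cv (sum_f_R0 (term_re ax ay b t)) (g t).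
Hypothesis Hq1 : 1 < q.
Hypothesis Hq : forall j, (Nq <= j)%nat -> q * b j <= b (S j).
Hypothesis Hm2 : 2 <= m.
Hypothesis Hdm : 2 / m <= 1 - / q.
Hypothesis Hrho : 4 * hat_const m (1 - / q) / (q - 1) <= (width m - 1) / 2.

Lemma off_diagonal_kernel_sum_le N0 n : (Nq < N0)%nat -> (N0 <= n)%nat ->
  (forall j, (N0 <= j)%nat -> cmod (ax j) (ay j) <= cmod (ax n) (ay n)) ->
  forall N, (n <= N)%nat ->
  sum_f_R0 (fun j => b n * (if (j =? n)%nat then 0 else cmod (ax j) (ay j) *
      (Rabs (kcos_hat m (b j / b n)) + Rabs (ksin_hat m (b j / b n))))) N <=
    2 * hat_const m (1 - / q) * sum_lt (fun i => cmod (ax i) (ay i) * b i * b i) N0 / b N0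
    + 4 * hat_const m (1 - / q) * (cmod (ax n) (ay n) * b n) / (q - 1).
Proof.
  intros HN0 HN0n Hmax N HnN.
  set (A := fun j => cmod (ax j) (ay j)). fold A in Hmax |- *.
  change (sum_lt (fun i => cmod (ax i) (ay i) * b i * b i) N0) with (sum_lt (fun i => A i * b i * b i) N0).
  set (C := hat_const m (1 - / q)). set (lam := fun j => b j / b n).
  set (off := fun j => if (j =? n)%nat then 0
                       else A j * (Rabs (kcos_hat m (lam j)) + Rabs (ksin_hat m (lam j)))).
  set (tau := fun j => b n * off j).
  assert (HA0 : forall j, 0 <= A j) by (intro; apply cmod_ge0).
  assert (Hbn := Hpos n).
  assert (HC : 0 <= C).
  { unfold C, hat_const. assert (0 < 1 - / q) by (apply Rlt_le_trans with (2 / m);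
      [apply Rdiv_lt_0_compat|]; lra).
    apply Rmult_le_pos; [lra | left; apply Rinv_0_lt_compat].
    repeat apply Rmult_lt_0_compat; nra. }
  assert (Hd_below : forall j, (j < n)%nat -> q * b j <= b n).
  { intros j Hj. assert (H1 := Hq (pred n) ltac:(lia)). replace (S (pred n)) with n in H1 by lia.
    assert (b j <= b (pred n)) by (apply lac_le; auto; lia). nra. }
  change (sum_f_R0 tau N <= 2 * C * sum_lt (fun i => A i * b i * b i) N0 / b N0 + 4 * C * (A n * b n) / (q - 1)).
  apply (off_diagonal_sum_le b q Nq Hpos Hinc Hq1 Hq); auto.
  - intros j Hj. unfold tau, off. replace (j =? n)%nat with false by (symmetry; apply Nat.eqb_neq; lia).
    assert (Hlj : 0 <= lam j) by (unfold lam; apply Rmult_le_pos; [left; auto | left; apply Rinv_0_lt_compat; auto]).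
    assert (Hlq : 1 - / q <= 1 - lam j).
    { assert (lam j <= / q); [|lra]. unfold lam. apply Rmult_le_reg_r with (q * b n); [nra|].
      replace (b j / b n * (q * b n)) with (q * b j) by (field; lra).
      replace (/ q * (q * b n)) with (b n) by (field; lra). auto. }
    destruct (kernel_hat_low m Hm2 (lam j) (1 - / q) Hdm Hlj Hlq) as [h1 h2]. fold C in h1, h2.
    apply Rle_trans with (b n * (A j * (2 * C * (lam j * lam j)))).
    + apply Rmult_le_compat_l; [lra|]. apply Rmult_le_compat_l; [auto | lra].
    + right. unfold lam. field. lra.
  - unfold tau, off. rewrite Nat.eqb_refl. lra.
  - intros j Hj. unfold tau, off. replace (j =? n)%nat with false by (symmetry; apply Nat.eqb_neq; lia).
    assert (Hbj := Hpos j). assert (Hqb := lac_gap b q Nq Hinc Hq n j ltac:(lia) Hj).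
    assert (Hlj : 0 < lam j) by (unfold lam; apply Rdiv_lt_0_compat; auto).
    assert (Hlq : (1 - / q) * lam j <= lam j - 1).
    { assert (1 <= / q * lam j); [|lra]. unfold lam.
      apply Rmult_le_reg_r with (q * b n); [nra|].
      replace (/ q * (b j / b n) * (q * b n)) with (b j) by (field; lra). lra. }
    destruct (kernel_hat_high m Hm2 (lam j) (1 - / q) Hdm Hlj Hlq) as [h1 h2]. fold C in h1, h2.
    apply Rle_trans with (b n * (A j * (2 * (C / lam j)))).
    + apply Rmult_le_compat_l; [lra|]. apply Rmult_le_compat_l; [auto | lra].
    + right. unfold lam. field. lra.
Qed.

Section Pairing.

Variables (t0 D eps eta : R).
Hypothesis Heps : 0 < eps.
Hypothesis Hdiff : forall h, Rabs h < eta -> Rabs (g (t0 + h) - g t0 - D * h) <= eps * Rabs h.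

Lemma series_kernel_pairings_le n N : width m / b n < eta ->
  Rabs (sum_f_R0 (fun j => term_re ax ay b t0 j * kcos_hat m (b j / b n)) N)
    <= 8 * (width m * width m) * eps / b n
       + 16 * width m * (l - sum_f_R0 (fun j => cmod (ax j) (ay j)) N) /\
  Rabs (sum_f_R0 (fun j => term_im ax ay b t0 j * ksin_hat m (b j / b n)) N)
    <= 8 * (width m * width m) * eps / b n
       + 16 * width m * (l - sum_f_R0 (fun j => cmod (ax j) (ay j)) N).
Proof.
  intros Hsb. assert (HS : 0 < width m) by (unfold width; assert (H := PI_RGT_0); nra).
  assert (Hbn := Hpos n).
  assert (Hr : forall h, Rabs (g (t0 + h) - sum_f_R0 (term_re ax ay b (t0 + h)) N)
                         <= l - sum_f_R0 (fun j => cmod (ax j) (ay j)) N).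
  { intro h. apply (series_remainder_le (term_re ax ay b (t0 + h)) (fun j => cmod (ax j) (ay j)) l);
      auto using Rabs_term_re_le. }
  replace (8 * (width m * width m) * eps / b n + 16 * width m * (l - sum_f_R0 (fun j => cmod (ax j) (ay j)) N))
    with (2 * width m * (4 * (eps * (width m / b n) + 2 * (l - sum_f_R0 (fun j => cmod (ax j) (ay j)) N))))
    by (field; lra).
  split.
  - assert (I := kernel_pairing_le (kcos m) (kcos_hat m) (fun _ => 0) (width m) 4 HS
      (fun s => proj1 (kernel_abs_le m Hm2 s)) (is_RInt_kcos_cos m) (is_RInt_kcos_sin m)
      (is_RInt_kcos m Hm2) (is_RInt_kcos_id m) ax ay b g t0 D eps eta (b n) _ N
      ltac:(lra) Hbn Hsb Hdiff Hr).
    erewrite sum_eq; [exact I|]. intros j _. cbv beta. ring.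
  - assert (I := kernel_pairing_le (ksin m) (fun _ => 0) (ksin_hat m) (width m) 4 HS
      (fun s => proj2 (kernel_abs_le m Hm2 s)) (is_RInt_ksin_cos m) (is_RInt_ksin_sin m)
      (is_RInt_ksin m) (is_RInt_ksin_id m Hm2) ax ay b g t0 D eps eta (b n) _ N
      ltac:(lra) Hbn Hsb Hdiff Hr).
    rewrite <- Rabs_Ropp, <- (Rmult_1_l (sum_f_R0 _ N)), Ropp_mult_distr_l, scal_sum.
    erewrite sum_eq; [exact I|]. intros j _. cbv beta. ring.
Qed.

Lemma diagonal_kernel_le n N : width m / b n < eta -> (n <= N)%nat ->
  (width m - 1) * (cmod (ax n) (ay n) * b n) <=
    16 * (width m * width m) * eps
    + 32 * width m * b n * (l - sum_f_R0 (fun j => cmod (ax j) (ay j)) N)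
    + sum_f_R0 (fun j => b n * (if (j =? n)%nat then 0 else cmod (ax j) (ay j) *
        (Rabs (kcos_hat m (b j / b n)) + Rabs (ksin_hat m (b j / b n))))) N.
Proof.
  intros Hsb HnN. destruct (series_kernel_pairings_le n N Hsb) as [Ix Iy].
  destruct (kernel_hat_1 m Hm2) as [HE HO].
  assert (Hbn := Hpos n). assert (HS : 4 <= width m) by (unfold width; assert (H := PI2_1); nra).
  set (lam := fun j => b j / b n).
  assert (Hlam : lam n = 1) by (unfold lam; field; lra).
  assert (HAn : cmod (ax n) (ay n) <= Rabs (term_re ax ay b t0 n) + Rabs (term_im ax ay b t0 n))
    by (rewrite <- (cmod_term ax ay b t0 n); apply cmod_bounds).
  assert (K := diagonal_coefficient_le (term_re ax ay b t0) (term_im ax ay b t0)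
    (fun j => cmod (ax j) (ay j)) lam (kcos_hat m) (ksin_hat m) (width m - 1) _ n N
    (fun j => conj (Rabs_term_re_le ax ay b t0 j) (Rabs_term_im_le ax ay b t0 j))
    HAn ltac:(lra) HE HO Hlam HnN Ix Iy).
  rewrite sum_f_R0_scal_l. apply Rmult_le_compat_r with (r := b n) in K; [|lra].
  replace ((width m - 1) * (cmod (ax n) (ay n) * b n)) with ((width m - 1) * cmod (ax n) (ay n) * b n) by ring.
  eapply Rle_trans; [exact K|]. right. unfold lam. field. lra.
Qed.

Lemma max_coefficient_le N0 n : (Nq < N0)%nat -> (N0 <= n)%nat ->
  (forall j, (N0 <= j)%nat -> cmod (ax j) (ay j) <= cmod (ax n) (ay n)) ->
  width m / b n < eta ->
  (width m - 1) / 2 * (cmod (ax n) (ay n) * b n) <=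
    16 * (width m * width m) * eps
    + 2 * hat_const m (1 - / q) * sum_lt (fun i => cmod (ax i) (ay i) * b i * b i) N0 / b N0.
Proof.
  intros HN0 HN0n Hmax Hsb.
  set (A := fun j => cmod (ax j) (ay j)). fold A in Hmax |- *.
  change (sum_lt (fun i => cmod (ax i) (ay i) * b i * b i) N0) with (sum_lt (fun i => A i * b i * b i) N0).
  set (w := width m). set (C := hat_const m (1 - / q)). set (lam := fun j => b j / b n).
  set (off := fun j => if (j =? n)%nat then 0
                       else A j * (Rabs (kcos_hat m (lam j)) + Rabs (ksin_hat m (lam j)))).
  assert (HA0 : forall j, 0 <= A j) by (intro; apply cmod_ge0).
  assert (Hbn := Hpos n). assert (HS : 4 <= w) by (unfold w, width; assert (H := PI2_1); nra).
  set (tau := fun j => b n * off j).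
  assert (Hoff : forall N, (n <= N)%nat -> sum_f_R0 tau N <=
    2 * C * sum_lt (fun i => A i * b i * b i) N0 / b N0 + 4 * C * (A n * b n) / (q - 1))
    by exact (off_diagonal_kernel_sum_le N0 n HN0 HN0n Hmax).
  assert (Hdiag : forall N, (n <= N)%nat ->
    (w - 1) * (A n * b n) <= 16 * (w * w) * eps + 32 * w * b n * (l - sum_f_R0 A N) + sum_f_R0 tau N)
    by exact (fun N => diagonal_kernel_le n N Hsb).
  apply (le_of_le_plus_cv_0 _ _ (32 * w * b n) (fun N => l - sum_f_R0 A N) n); [apply Rmult_le_pos; lra| |].
  - intros e He. destruct (Hsum e He) as [N HN]. exists N. intros k Hk. specialize (HN k Hk).
    unfold R_dist in *. rewrite Rminus_0_r, Rabs_minus_sym. exact HN.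
  - intros N HnN. assert (H1 := Hdiag N HnN). assert (H2 := Hoff N HnN).
    assert (4 * C * (A n * b n) / (q - 1) <= (w - 1) / 2 * (A n * b n)).
    { replace (4 * C * (A n * b n) / (q - 1)) with (4 * C / (q - 1) * (A n * b n)) by (field; lra).
      apply Rmult_le_compat_r; [specialize (HA0 n); nra | exact Hrho]. }
    assert ((w - 1) * (A n * b n) = 2 * ((w - 1) / 2 * (A n * b n))) by field.
    change (cmod (ax n) (ay n)) with (A n). lra.
Qed.

End Pairing.

Hypothesis Hinf : cv_infty b.

Lemma coefficients_eventually_le t0 D eps eta : 0 < eps -> 0 < eta ->
  (forall h, Rabs h < eta -> Rabs (g (t0 + h) - g t0 - D * h) <= eps * Rabs h) ->
  exists N2, forall N, (N2 <= N)%nat ->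
    cmod (ax N) (ay N) * b N <= 96 * (width m * width m) / (width m - 1) * eps.
Proof.
  intros Heps Heta Hdiff.
  set (A := fun j => cmod (ax j) (ay j)). set (w := width m). set (C := hat_const m (1 - / q)).
  assert (HA0 : forall j, 0 <= A j) by (intro; apply cmod_ge0).
  assert (Hw : 4 <= w) by (unfold w, width; assert (H := PI2_1); nra).
  assert (HC : 0 <= C).
  { unfold C, hat_const. assert (0 < 1 - / q) by (apply Rlt_le_trans with (2 / m);
      [apply Rdiv_lt_0_compat|]; lra).
    apply Rmult_le_pos; [lra | left; apply Rinv_0_lt_compat].
    repeat apply Rmult_lt_0_compat; nra. }
  destruct (Hinf (w / eta)) as [N1 HN1].
  destruct (lacunary_recursion_le b q Nq Hpos Hq1 Hq (fun i => A i * b i) (4 * C / (w - 1))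
              (32 * (w * w) * eps / (w - 1)) (max (S Nq) N1)) as [N2 HN2].
  - intro j. apply Rmult_le_pos; [apply HA0 | left; apply Hpos].
  - split; [apply Rmult_le_pos; [lra | left; apply Rinv_0_lt_compat; lra]|].
    apply Rmult_le_reg_r with ((w - 1) / (q - 1)); [apply Rdiv_lt_0_compat; lra|].
    replace (4 * C / (w - 1) * ((w - 1) / (q - 1))) with (4 * C / (q - 1)) by (field; lra).
    replace ((q - 1) / 2 * ((w - 1) / (q - 1))) with ((w - 1) / 2) by (field; lra). exact Hrho.
  - apply Rdiv_lt_0_compat; [apply Rmult_lt_0_compat; nra | lra].
  - intros N0 HN0. cbv beta.
    destruct (argmax_from A HA0 (series_terms_cv_0 A l Hsum) N0) as [n [Hn Hmax]].
    assert (Hbn := Hpos n). assert (HbN0 := Hpos N0).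
    assert (Hsb : w / b n < eta).
    { assert (HN1n := HN1 n ltac:(lia)).
      assert (w = w / eta * eta) by (field; lra).
      apply Rmult_lt_reg_r with (b n); [lra|]. unfold Rdiv at 1.
      rewrite Rmult_assoc, Rinv_l, Rmult_1_r by lra. nra. }
    assert (K := max_coefficient_le t0 D eps eta Heps Hdiff N0 n ltac:(lia) Hn Hmax Hsb).
    fold A w C in K.
    assert (HcN0 : A N0 * b N0 <= A n * b n).
    { apply Rmult_le_compat; [apply HA0 | lra | apply Hmax; lia | apply lac_le; auto]. }
    change (sum_lt (fun i => A i * b i * b i) N0) with (sum_lt (fun i => cmod (ax i) (ay i) * b i * b i) N0).
    set (T := sum_lt (fun i => cmod (ax i) (ay i) * b i * b i) N0) in *.
    apply Rmult_le_reg_l with ((w - 1) / 2); [lra|].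
    eapply Rle_trans; [apply Rmult_le_compat_l; [lra | exact HcN0]|].
    eapply Rle_trans; [exact K|]. right. field. lra.
  - exists N2. intros N HN. specialize (HN2 N HN). cbv beta in HN2.
    replace (96 * (w * w) / (w - 1) * eps) with (3 * (32 * (w * w) * eps / (w - 1))) by (field; lra).
    exact HN2.
Qed.

End LocalApproximation.

Section LacunarySeries.

Variables (ax ay b : nat -> R) (g : R -> R) (l : R).
Hypothesis Hsum : Un_cv (sum_f_R0 (fun j => cmod (ax j) (ay j))) l.
Hypothesis Hpos : forall j, 0 < b j.
Hypothesis Hinc : forall j, b j < b (S j).
Hypothesis Hinf : cv_infty b.
Hypothesis Hlacun : exists q, 1 < q /\ exists N, forall j, (N <= j)%nat -> q <= b (S j) / b j.
Hypothesis Hg : forall t, Un_cv (sum_f_R0 (term_re ax ay b t)) (g t).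

Lemma local_approximation_bound : exists a0, 0 < a0 /\
  forall t0 D eps eta, 0 < eps -> 0 < eta ->
  (forall h, Rabs h < eta -> Rabs (g (t0 + h) - g t0 - D * h) <= eps * Rabs h) ->
  exists N2, forall N, (N2 <= N)%nat -> cmod (ax N) (ay N) * b N <= a0 * eps.
Proof.
  destruct Hlacun as [q [Hq1 [Nq HNq]]].
  assert (Hq : forall j, (Nq <= j)%nat -> q * b j <= b (S j)).
  { intros j Hj. specialize (HNq j Hj). assert (Hbj := Hpos j).
    apply Rmult_le_reg_r with (/ b j); [apply Rinv_0_lt_compat; lra|].
    rewrite Rmult_assoc, Rinv_r by lra. lra. }
  destruct (kernel_scale_exists q Hq1) as [m (Hm2 & Hdm & Hrho)].
  assert (Hw : 4 <= width m) by (unfold width; assert (H := PI2_1); nra).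
  exists (96 * (width m * width m) / (width m - 1)). split.
  - apply Rdiv_lt_0_compat; [nra | lra].
  - intros t0 D eps eta. exact (coefficients_eventually_le ax ay b g l q Nq m
      Hsum Hpos Hinc Hg Hq1 Hq Hm2 Hdm Hrho Hinf t0 D eps eta).
Qed.

Lemma lacunary_not_derivable : ~ Un_cv (fun j => cmod (ax j) (ay j) * b j) 0 ->
  forall t D, ~ derivable_pt_lim g t D.
Proof.
  intros Hnot0 t D HD. apply Hnot0.
  destruct local_approximation_bound as [a0 [Ha0 Hcore]].
  intros e He. set (eps := e / (2 * a0)).
  assert (Heps : 0 < eps) by (unfold eps; apply Rdiv_lt_0_compat; lra).
  destruct (HD eps Heps) as [dl Hdl].
  destruct (Hcore t D eps dl Heps (cond_pos dl)) as [N2 HN2].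
  - intros h Hh. destruct (Req_dec h 0) as [->|hn].
    + rewrite Rplus_0_r, Rmult_0_r, !Rminus_diag, Rabs_R0. lra.
    + specialize (Hdl h hn Hh).
      replace (g (t + h) - g t - D * h) with (h * ((g (t + h) - g t) / h - D)) by (field; auto).
      rewrite Rabs_mult, Rmult_comm. apply Rmult_le_compat_r; [apply Rabs_pos | lra].
  - exists N2. intros n Hn. specialize (HN2 n Hn). unfold R_dist. rewrite Rminus_0_r.
    assert (0 <= cmod (ax n) (ay n) * b n) by (apply Rmult_le_pos; [apply cmod_ge0 | left; auto]).
    rewrite Rabs_right by lra. apply Rle_lt_trans with (1 := HN2). unfold eps.
    replace (a0 * (e / (2 * a0))) with (e / 2) by (field; lra). lra.
Qed.

Lemma lacunary_not_lipschitz : (forall M, exists j, M < cmod (ax j) (ay j) * b j) ->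
  forall t, ~ lipschitz_at g t.
Proof.
  intros Hsup t [L [eta [HL [Heta Hlip]]]].
  destruct local_approximation_bound as [a0 [Ha0 Hcore]].
  destruct (Hcore t 0 L eta HL Heta) as [N2 HN2].
  { intros h Hh. rewrite Rmult_0_l, Rminus_0_r.
    specialize (Hlip (t + h)). replace (t + h - t) with h in Hlip by ring. auto. }
  set (c := fun j => cmod (ax j) (ay j) * b j).
  assert (Hc0 : forall j, 0 <= c j) by (intro j; apply Rmult_le_pos; [apply cmod_ge0 | left; auto]).
  destruct (Hsup (a0 * L + sum_f_R0 c N2)) as [j Hj]. fold (c j) in Hj.
  assert (0 <= sum_f_R0 c N2) by (apply cond_pos_sum; auto).
  assert (0 < a0 * L) by nra.
  destruct (Nat.le_gt_cases N2 j) as [h|h].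
  - specialize (HN2 j h). fold (c j) in HN2. lra.
  - assert (c j <= sum_f_R0 c N2) by (apply sum_f_R0_ge_term; auto; lia). lra.
Qed.

Lemma lacunary_real_part :
  (forall t, Rabs (g t) <= l) /\ continuity g /\
  (~ Un_cv (fun j => cmod (ax j) (ay j) * b j) 0 -> forall t D, ~ derivable_pt_lim g t D) /\
  ((forall M, exists j, M < cmod (ax j) (ay j) * b j) -> forall t, ~ lipschitz_at g t).
Proof.
  split; [|split; [|split]].
  - intro t. exact (series_abs_le _ _ l (Rabs_term_re_le ax ay b t) Hsum _ (Hg t)).
  - apply (series_continuity (term_re ax ay b) _ l g (Rabs_term_re_le ax ay b) Hsum Hg).
    intros j t. apply term_re_continuity_pt.
  - exact lacunary_not_derivable.
  - exact lacunary_not_lipschitz.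
Qed.

End LacunarySeries.

Lemma Un_cv_ext (u v : nat -> R) l : (forall n, u n = v n) -> Un_cv u l -> Un_cv v l.
Proof. intros H Hu e He. destruct (Hu e He) as [N HN]. exists N. intros n Hn. rewrite <- H. auto. Qed.

Theorem theorem2p1 (ax ay b : nat -> R) (fre fim : R -> R)
  (Hsum : exists l, Un_cv (fun n => sum_f_R0 (fun j => cmod (ax j) (ay j)) n) l)
  (Hinc : forall j, b j < b (S j))
  (Hpos : forall j, 0 < b j)
  (Hinf : cv_infty b)
  (Hlacun : exists q, 1 < q /\ exists N, forall j, (N <= j)%nat -> q <= b (S j) / b j)
  (Hnot0 : ~ Un_cv (fun j => cmod (ax j) (ay j) * b j) 0)
  (Hfre : forall t, Un_cv (fun n => sum_f_R0 (term_re ax ay b t) n) (fre t))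
  (Hfim : forall t, Un_cv (fun n => sum_f_R0 (term_im ax ay b t) n) (fim t)) :
  (exists M, forall t, cmod (fre t) (fim t) <= M) /\
  (exists M, forall t, Rabs (fre t) <= M) /\
  (exists M, forall t, Rabs (fim t) <= M) /\
  continuity fre /\ continuity fim /\
  (forall t, ~ cdifferentiable_at fre fim t) /\
  (forall t l, ~ derivable_pt_lim fre t l) /\
  (forall t l, ~ derivable_pt_lim fim t l) /\
  ((forall M, exists j, M < cmod (ax j) (ay j) * b j) ->
     (forall t, ~ clipschitz_at fre fim t) /\
     (forall t, ~ lipschitz_at fre t) /\
     (forall t, ~ lipschitz_at fim t)).
Proof.
  destruct Hsum as [l Hl].
  assert (Hswap : forall j, cmod (ay j) (- ax j) = cmod (ax j) (ay j)) by (intro; apply cmod_swap_opp).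
  destruct (lacunary_real_part ax ay b fre l Hl Hpos Hinc Hinf Hlacun Hfre)
    as (Bre & Cre & NDre & NLre).
  destruct (lacunary_real_part ay (fun k => - ax k) b fim l) as (Bim & Cim & NDim & NLim); auto.
  { apply (Un_cv_ext (sum_f_R0 (fun j => cmod (ax j) (ay j)))); auto. intro. apply sum_eq; auto. }
  { intro t. apply (Un_cv_ext (sum_f_R0 (term_im ax ay b t))); auto.
    intro. apply sum_eq. intros. apply term_im_as_re. }
  split; [|split; [|split; [|split; [|split; [|split; [|split; [|split]]]]]]]; eauto.
  - exists (2 * l). intro t. destruct (cmod_bounds (fre t) (fim t)) as (_ & _ & H).
    specialize (Bre t). specialize (Bim t). lra.
  - intros t [lr [li [H _]]]. exact (NDre Hnot0 t lr H).
  - apply NDim. intro H. apply Hnot0. apply (Un_cv_ext _ _ 0 (fun j => f_equal2 Rmult (Hswap j) eq_refl) H).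
  - intros Hsup. split; [|split; [|apply NLim; intro M; destruct (Hsup M) as [j Hj]; exists j;
      rewrite Hswap; exact Hj]]; auto.
    intros t [L [eta [HL [Heta Hlip]]]]. apply (NLre Hsup t). exists L, eta. repeat split; auto.
    intros t' Ht'. specialize (Hlip t' Ht').
    destruct (cmod_bounds (fre t' - fre t) (fim t' - fim t)) as (H & _). lra.
Qed.
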